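(* Let $k\ge 2$ be an integer, let $k_0=\lfloor (k-1)/2\rfloor$ (the largest integer with $2k_0\le k-1$) and $k_1=\lfloor (k-2)/2\rfloor$ (the largest integer with $2k_1+2\le k$). Then there exist functions $f_k(\theta,\lambda)$ and $w_k^{2j+1}(s,\lambda)$ ($j=0,\dots,k_1$), each polynomial in $\lambda$, such that for all $\theta$ $$v_k(\theta)=f_k(\theta,\lambda)+\sum_{j=0}^{k_1}\lambda_{2j+1}\,w_k^{2j+1}(\sin\theta,\lambda),$$ where for every $\theta$ the polynomial $f_k(\theta,\cdot)$ belongs to the ideal $(\lambda_2,\lambda_4,\dots,\lambda_{2k_0})\subset\mathbb{R}[\lambda_1,\dots,\lambda_d]$ (the zero ideal if $k_0=0$), and $w_k^{2j+1}(0,\lambda)=0$ for all $\lambda$ and all $j$.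
   Context: Let $d\ge1$, let $\lambda=(\lambda_1,\dots,\lambda_d)$ be real parameters, and $p(x)=\sum_{i=1}^d\lambda_i x^i$. Consider the planar Liénard system $\dot x=y$, $\dot y=-x+p(x)y$. In polar coordinates $x=r\cos\theta$, $y=r\sin\theta$ its orbits satisfy $$\frac{dr}{d\theta}=\frac{r\,p(r\cos\theta)\sin^2\theta}{-1+\sin\theta\cos\theta\,p(r\cos\theta)}.$$ For small $r_0$ let $r(\theta;r_0)$ be the solution of this equation with $r(0;r_0)=r_0$. For each $\theta$, the map $r_0\mapsto r(\theta;r_0)$ is analytic near $0$ and tangent to the identity, and its inverse has the expansion $r_0=r+\sum_{k\ge2}v_k(\theta)r^k$ where $r=r(\theta;r_0)$; set $v_1(\theta)=1$. Each $v_k(\theta)$ is a polynomial in $\lambda$ with real coefficients depending on $\theta$. Convention: $\lambda_i=0$ for $i>d$. *)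

From Stdlib Require Import Reals Lra Lia Arith.
From Coquelicot Require Import Coquelicot.
Open Scope R_scope.

(* Parameters lambda = (lambda_1,...,lambda_d) are encoded as l : nat -> R
   with the convention lambda_i = 0 for i > d (and the unused index 0 set to 0). *)
Definition valid_params (d : nat) (l : nat -> R) : Prop :=
  forall i : nat, (i = 0%nat \/ (d < i)%nat) -> l i = 0.

Definition pL (d : nat) (l : nat -> R) (x : R) : R :=
  sum_n_m (fun i => l i * x ^ i) 1 d.

Definition denL (d : nat) (l : nat -> R) (t r : R) : R :=
  -1 + sin t * cos t * pL d l (r * cos t).

Definition rhsL (d : nat) (l : nat -> R) (t r : R) : R :=
  r * pL d l (r * cos t) * (sin t) ^ 2 / denL d l t r.

Definition is_polar_sol (d : nat) (l : nat -> R) (r0 theta : R) (r : R -> R) : Prop :=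
  r 0 = r0 /\
  forall t, Rmin 0 theta <= t <= Rmax 0 theta ->
    denL d l t (r t) <> 0 /\ is_derive r t (rhsL d l t (r t)).

(* v : nat -> R -> (nat -> R) -> R, v k theta lambda = v_k(theta) evaluated at lambda,
   is characterised by the inverse expansion
     r0 = r + sum_{k>=2} v_k(theta) r^k,  r = r(theta; r0),
   valid for all sufficiently small r0 (this determines v_k, k >= 2, uniquely). *)
Definition inverse_expansion (d : nat) (v : nat -> R -> (nat -> R) -> R) : Prop :=
  forall l, valid_params d l -> forall theta : R,
    exists delta, 0 < delta /\
      forall r0 (r : R -> R), Rabs r0 < delta -> is_polar_sol d l r0 theta r ->
        is_series (fun n => v (n + 2)%nat theta l * (r theta) ^ (n + 2)) (r0 - r theta).

Fixpoint prod_1_to (d : nat) (a : nat -> R) : R :=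
  match d with
  | O => 1
  | S d' => prod_1_to d' a * a (S d')
  end.

Definition is_poly_in (d : nat) (g : (nat -> R) -> R) : Prop :=
  exists (n : nat) (c : nat -> R) (e : nat -> nat -> nat),
    forall l, valid_params d l ->
      g l = sum_n (fun m => c m * prod_1_to d (fun i => l i ^ (e m i))) n.

Definition in_even_ideal (d k0 : nat) (f : (nat -> R) -> R) : Prop :=
  exists (g : nat -> (nat -> R) -> R),
    (forall i, is_poly_in d (g i)) /\
    forall l, valid_params d l ->
      f l = sum_n_m (fun i => l (2 * i)%nat * g i l) 1 k0.

From Stdlib Require Import Reals Lra Lia Arith List ZArith ClassicalEpsilon.
From Coquelicot Require Import Coquelicot.
Open Scope R_scope.

(* Write the inverse of [r0 |-> r(theta; r0)] as [Phi(theta, r) = sum_k U_k(theta) r^k].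
   Requiring [Phi] to be constant along orbits determines [U_k] from [U_1, ..., U_(k-1)]
   by one integration in theta, so each [U_k] is a polynomial in lambda with continuous
   coefficients in theta; comparing with the given expansion along actual orbits (which
   exist by Picard iteration) shows [v_k = U_k].
   When [lambda_2 = ... = lambda_(2 k0) = 0] the system is reversible under
   [(x, y, t) -> (-x, y, -t)], i.e. [theta -> PI - theta]; then [U_k] is 2 PI-periodic and
   symmetric about [PI / 2], hence a function of [sin theta], vanishing at [theta = 0].
   Since [U_k] only involves [lambda_1, ..., lambda_(k-1)], it also vanishes once the odd
   parameters [lambda_1, lambda_3, ..., lambda_(2 k1 + 1)] are set to 0.  Peeling off first
   the even and then the odd parameters one at a time yields [f_k] and the [w_k^(2j+1)]. *)

(* Specializations to [R] of Coquelicot's lemmas on normed modules, stated so that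
   [apply] unifies them with goals written with [Rplus], [Rmult], ... *)
Lemma sum_n_m_ext_loc_R (a b : nat -> R) n m :
  (forall k, (n <= k <= m)%nat -> a k = b k) -> sum_n_m a n m = sum_n_m b n m.
Proof. apply sum_n_m_ext_loc. Qed.

Lemma sum_n_m_eq_0 (a : nat -> R) n m :
  (forall k, (n <= k <= m)%nat -> a k = 0) -> sum_n_m a n m = 0.
Proof.
  intros H. rewrite (sum_n_m_ext_loc a (fun _ => 0)) by auto.
  apply (sum_n_m_const_zero (G := R_AbelianMonoid)).
Qed.

Lemma sum_n_m_opp (f : nat -> R) n m : sum_n_m (fun p => - f p) n m = - sum_n_m f n m.
Proof.
  pose proof (sum_n_m_mult_l (K := R_Ring) (-1) f n m) as E. unfold mult in E; simpl in E.
  set (X := sum_n_m f n m) in *. replace (- X) with (-1 * X) by ring.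
  etransitivity; [|exact E]. apply sum_n_m_ext; intros; simpl; ring.
Qed.

Lemma continuous_Rplus (f g : R -> R) t :
  continuous f t -> continuous g t -> continuous (fun x => f x + g x) t.
Proof. intros; apply (continuous_plus f g); auto. Qed.

Lemma continuous_Rmult (f g : R -> R) t :
  continuous f t -> continuous g t -> continuous (fun x => f x * g x) t.
Proof. intros; apply (continuous_mult f g); auto. Qed.

Lemma continuous_Rminus (f g : R -> R) t :
  continuous f t -> continuous g t -> continuous (fun x => f x - g x) t.
Proof. intros; apply (continuous_minus f g); auto. Qed.

Lemma continuous_Rpow (f : R -> R) n t : continuous f t -> continuous (fun x => f x ^ n) t.
Proof.
  intros H; induction n; simpl; [apply continuous_const|apply continuous_Rmult; auto].
Qed.

Lemma continuous_sum_n_m (G : nat -> R -> R) a b t :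
  (forall p, (a <= p <= b)%nat -> continuous (G p) t) ->
  continuous (fun x => sum_n_m (fun p => G p x) a b) t.
Proof.
  intros H. induction b as [|b IH].
  - destruct a.
    + apply (continuous_ext (G O)); [intros; rewrite sum_n_n; reflexivity|apply H; lia].
    + apply (continuous_ext (fun _ => 0)); [|apply continuous_const].
      intros; rewrite sum_n_m_zero by lia; reflexivity.
  - destruct (le_lt_dec a (S b)).
    + destruct (Nat.eq_dec a (S b)) as [->|].
      * apply (continuous_ext (G (S b))); [intros; rewrite sum_n_n; reflexivity|apply H; lia].
      * apply (continuous_ext (fun x => sum_n_m (fun p => G p x) a b + G (S b) x)).
        { intros; rewrite sum_n_Sm by lia; reflexivity. }
        apply (continuous_Rplus (fun x => sum_n_m (fun p => G p x) a b)); [apply IH|apply H];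
          intros; try apply H; lia.
    + apply (continuous_ext (fun _ => 0)); [|apply continuous_const].
      intros; rewrite sum_n_m_zero by lia; reflexivity.
Qed.

Lemma ex_RInt_continuous_R (f : R -> R) a b : (forall t, continuous f t) -> ex_RInt f a b.
Proof. intros H; apply (ex_RInt_continuous (V := R_CompleteNormedModule)); auto. Qed.

Lemma RInt_plus_R (f g : R -> R) a b : (forall t, continuous f t) -> (forall t, continuous g t) ->
  RInt (fun x => f x + g x) a b = RInt f a b + RInt g a b.
Proof.
  intros Hf Hg. exact (RInt_plus f g a b (ex_RInt_continuous_R f a b Hf)
    (ex_RInt_continuous_R g a b Hg)).
Qed.

Lemma RInt_minus_R (f g : R -> R) a b : (forall t, continuous f t) -> (forall t, continuous g t) ->
  RInt (fun x => f x - g x) a b = RInt f a b - RInt g a b.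
Proof.
  intros Hf Hg. exact (RInt_minus f g a b (ex_RInt_continuous_R f a b Hf)
    (ex_RInt_continuous_R g a b Hg)).
Qed.

Lemma RInt_mult_const_R (f : R -> R) a b c : (forall t, continuous f t) ->
  RInt (fun x => f x * c) a b = RInt f a b * c.
Proof.
  intros Hf. pose proof (RInt_scal f a b c (ex_RInt_continuous_R f a b Hf)) as E.
  unfold scal in E; simpl in E; unfold mult in E; simpl in E.
  rewrite Rmult_comm, <- E. apply RInt_ext; intros; apply Rmult_comm.
Qed.

Lemma RInt_0_const (c t : R) : RInt (fun _ => c) 0 t = c * t.
Proof. rewrite RInt_const. unfold scal; simpl; unfold mult; simpl; ring. Qed.

Lemma is_derive_RInt_0 (f : R -> R) t : (forall t, continuous f t) ->
  is_derive (fun x => RInt f 0 x) t (f t).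
Proof.
  intros H. apply (is_derive_RInt (V := R_CompleteNormedModule)) with (a := 0); [|apply H].
  apply filter_forall. intros; apply RInt_correct, ex_RInt_continuous_R; auto.
Qed.

Lemma is_derive_continuous_R (f : R -> R) t l : is_derive f t l -> continuous f t.
Proof. intros H. apply (ex_derive_continuous (K := R_AbsRing) (V := R_NormedModule)); eexists; eauto. Qed.

Lemma continuous_RInt_0_R (f : R -> R) t :
  (forall t, continuous f t) -> continuous (fun x => RInt f 0 x) t.
Proof. intros H. eapply is_derive_continuous_R, is_derive_RInt_0, H. Qed.

Lemma is_derive_const_R (c x : R) : is_derive (fun _ => c) x 0.
Proof. apply is_derive_Reals, derivable_pt_lim_const. Qed.

Lemma is_derive_id_R (x : R) : is_derive (fun y => y) x 1.
Proof. apply is_derive_Reals, derivable_pt_lim_id. Qed.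

Lemma is_derive_Rplus (f g : R -> R) x a b :
  is_derive f x a -> is_derive g x b -> is_derive (fun y => f y + g y) x (a + b).
Proof. intros; apply (is_derive_plus f g); auto. Qed.

Lemma is_derive_Rminus (f g : R -> R) x a b :
  is_derive f x a -> is_derive g x b -> is_derive (fun y => f y - g y) x (a - b).
Proof. intros; apply (is_derive_minus f g); auto. Qed.

Lemma is_derive_Rmult (f g : R -> R) x a b : is_derive f x a -> is_derive g x b ->
  is_derive (fun y => f y * g y) x (a * g x + f x * b).
Proof. intros; apply (is_derive_mult f g); auto. intros; apply Rmult_comm. Qed.

Lemma is_derive_const_add (f : R -> R) c x a :
  is_derive f x a -> is_derive (fun y => c + f y) x a.
Proof.
  intros H. replace a with (0 + a) by ring.
  apply is_derive_Rplus; [apply is_derive_const_R|auto].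
Qed.

Lemma const_of_derive_0 (f : R -> R) : (forall t, is_derive f t 0) -> forall a b, f a = f b.
Proof.
  intros H a b. destruct (MVT_gen f a b (fun _ => 0)) as [c [_ Hc]].
  - intros; auto.
  - intros; apply continuity_pt_filterlim; eapply is_derive_continuous_R; eauto.
  - lra.
Qed.

(** * Polynomials in the parameters *)

Definition monomial (d : nat) (e : nat -> nat) (l : nat -> R) : R :=
  prod_1_to d (fun i => l i ^ e i).

Lemma prod_1_to_ext d a b :
  (forall i, (1 <= i <= d)%nat -> a i = b i) -> prod_1_to d a = prod_1_to d b.
Proof.
  induction d as [|d IH]; intros H; [reflexivity|]. simpl.
  rewrite IH by (intros; apply H; lia). rewrite (H (S d)) by lia. reflexivity.
Qed.

Lemma prod_1_to_1 d : prod_1_to d (fun _ => 1) = 1.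
Proof. induction d as [|d IH]; [reflexivity|]. simpl. rewrite IH; ring. Qed.

Lemma monomial_0 d l : monomial d (fun _ => 0%nat) l = 1.
Proof. apply prod_1_to_1. Qed.

Lemma monomial_add d e1 e2 l :
  monomial d (fun i => (e1 i + e2 i)%nat) l = monomial d e1 l * monomial d e2 l.
Proof.
  unfold monomial; induction d as [|d IH]; simpl; [ring|]. rewrite IH, pow_add; ring.
Qed.

Definition exp_unit (i : nat) : nat -> nat := fun j => if Nat.eqb j i then 1%nat else 0%nat.

Lemma monomial_unit d i l : (1 <= i <= d)%nat -> monomial d (exp_unit i) l = l i.
Proof.
  unfold monomial, exp_unit; induction d as [|d IH]; intros H; [lia|]. cbn [prod_1_to].
  destruct (Nat.eqb_spec (S d) i) as [<-|Hne].
  - rewrite (prod_1_to_ext d _ (fun _ => 1)), prod_1_to_1; [ring|].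
    intros j Hj. destruct (Nat.eqb_spec j (S d)); [lia|reflexivity].
  - rewrite IH by lia. ring.
Qed.

Definition zero_at (l : nat -> R) (i : nat) : nat -> R :=
  fun j => if Nat.eqb j i then 0 else l j.

Lemma zero_at_valid d l i : valid_params d l -> valid_params d (zero_at l i).
Proof. intros H j Hj; unfold zero_at; destruct (Nat.eqb j i); auto. Qed.

Definition exp_pred (e : nat -> nat) (i : nat) : nat -> nat :=
  fun j => if Nat.eqb j i then (e j - 1)%nat else e j.

Definition occurs (d i : nat) (e : nat -> nat) : bool :=
  (Nat.leb 1 i && Nat.leb i d && negb (Nat.eqb (e i) 0))%bool.

Lemma occurs_spec d i e : occurs d i e = true <-> ((1 <= i <= d)%nat /\ (e i > 0)%nat).
Proof.
  unfold occurs. rewrite !Bool.andb_true_iff, Bool.negb_true_iff, !Nat.leb_le, Nat.eqb_neq.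
  lia.
Qed.

Lemma monomial_zero_at d e l i :
  monomial d e (zero_at l i) = if occurs d i e then 0 else monomial d e l.
Proof.
  destruct (occurs d i e) eqn:E.
  - apply occurs_spec in E. unfold monomial. induction d as [|d IH]; [lia|]. cbn [prod_1_to].
    destruct (Nat.eqb_spec (S d) i) as [<-|Hne].
    + unfold zero_at. rewrite Nat.eqb_refl. destruct (e (S d)); [lia|]. simpl; ring.
    + rewrite IH by lia. ring.
  - apply prod_1_to_ext. intros j Hj. unfold zero_at.
    destruct (Nat.eqb_spec j i) as [->|]; [|reflexivity].
    destruct (Nat.eq_dec (e i) 0) as [->|Hne]; [reflexivity|].
    assert (occurs d i e = true) by (apply occurs_spec; lia). congruence.
Qed.

Lemma monomial_occurs d e l i :
  occurs d i e = true -> monomial d e l = l i * monomial d (exp_pred e i) l.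
Proof.
  intros [Hi He]%occurs_spec. unfold monomial, exp_pred.
  induction d as [|d IH]; [lia|]. cbn [prod_1_to].
  destruct (Nat.eqb_spec (S d) i) as [<-|Hne].
  - rewrite (prod_1_to_ext d (fun j => l j ^ (if Nat.eqb j (S d) then _ else _))
       (fun j => l j ^ e j)).
    + destruct (e (S d)) as [|n]; [lia|]. simpl. rewrite Nat.sub_0_r. ring.
    + intros j Hj. destruct (Nat.eqb_spec j (S d)); [lia|reflexivity].
  - rewrite IH by lia. ring.
Qed.

Definition poly_eval (d : nat) (L : list (R * (nat -> nat))) (l : nat -> R) : R :=
  fold_right (fun ce acc => fst ce * monomial d (snd ce) l + acc) 0 L.

Definition is_poly_fun (d : nat) (g : (nat -> R) -> R) : Prop :=
  exists L, forall l, valid_params d l -> g l = poly_eval d L l.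

Lemma is_poly_fun_0 d : is_poly_fun d (fun _ => 0).
Proof. exists nil; reflexivity. Qed.

Lemma is_poly_fun_is_poly_in d g : is_poly_fun d g -> is_poly_in d g.
Proof.
  intros [L HL]. exists (length L), (fun m => fst (nth m L (0, fun _ => 0%nat))),
    (fun m => snd (nth m L (0, fun _ => 0%nat))).
  intros l Hl. rewrite HL by auto. clear HL.
  induction L as [|[c e] L IH].
  - rewrite sum_O. simpl. ring.
  - unfold sum_n. simpl length. rewrite sum_Sn_m, <- sum_n_m_S by lia.
    simpl. rewrite IH. reflexivity.
Qed.

Lemma is_poly_fun_zero_at d g i :
  is_poly_fun d g -> is_poly_fun d (fun l => g (zero_at l i)).
Proof.
  intros [L HL].
  exists (map (fun ce => (if occurs d i (snd ce) then 0 else fst ce, snd ce)) L).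
  intros l Hl. rewrite HL by (apply zero_at_valid; auto). clear HL.
  induction L as [|[c e] L IH]; [reflexivity|]. simpl. rewrite IH, monomial_zero_at.
  destruct (occurs d i e); simpl; ring.
Qed.

Lemma is_poly_fun_peel d g i : is_poly_fun d g -> exists h, is_poly_fun d h /\
  forall l, valid_params d l -> g l = g (zero_at l i) + l i * h l.
Proof.
  intros [L HL].
  exists (poly_eval d (map (fun ce =>
    (if occurs d i (snd ce) then fst ce else 0, exp_pred (snd ce) i)) L)).
  split; [eexists; reflexivity|].
  intros l Hl. rewrite !HL by (try apply zero_at_valid; auto). clear HL.
  induction L as [|[c e] L IH]; simpl; [ring|]. rewrite IH, monomial_zero_at.
  destruct (occurs d i e) eqn:E; simpl; [rewrite (monomial_occurs d e l i E)|]; ring.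
Qed.

(* Sets [lambda_(phi 0)], ..., [lambda_(phi n)] to 0 ([n] included). *)
Fixpoint zero_at_all (phi : nat -> nat) (n : nat) (l : nat -> R) : nat -> R :=
  match n with
  | O => zero_at l (phi O)
  | S m => zero_at_all phi m (zero_at l (phi n))
  end.

Lemma zero_at_all_valid d phi n l :
  valid_params d l -> valid_params d (zero_at_all phi n l).
Proof.
  revert l; induction n as [|n IH]; intros l Hl; simpl; [|apply IH]; apply zero_at_valid; auto.
Qed.

Lemma zero_at_all_keep phi n l j :
  (forall i, (i <= n)%nat -> phi i <> j) -> zero_at_all phi n l j = l j.
Proof.
  revert l; induction n as [|n IH]; intros l H; simpl.
  - unfold zero_at. destruct (Nat.eqb_spec j (phi O)); [|reflexivity].
    exfalso; apply (H O); auto.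
  - rewrite IH by (intros; apply H; lia). unfold zero_at.
    destruct (Nat.eqb_spec j (phi (S n))); [|reflexivity]. exfalso; apply (H (S n)); auto.
Qed.

Lemma zero_at_all_cases phi n l j :
  zero_at_all phi n l j = 0 \/ zero_at_all phi n l j = l j.
Proof.
  revert l; induction n as [|n IH]; intros l; simpl.
  - unfold zero_at. destruct (Nat.eqb j (phi O)); auto.
  - destruct (IH (zero_at l (phi (S n)))) as [-> | ->]; auto.
    unfold zero_at. destruct (Nat.eqb j (phi (S n))); auto.
Qed.

Lemma zero_at_all_kill phi n l i : (i <= n)%nat -> zero_at_all phi n l (phi i) = 0.
Proof.
  revert l i; induction n as [|n IH]; intros l i Hi; simpl.
  - replace i with O by lia. unfold zero_at. rewrite Nat.eqb_refl. reflexivity.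
  - destruct (Nat.eq_dec i (S n)) as [->|Hne]; [|apply IH; lia].
    destruct (zero_at_all_cases phi n (zero_at l (phi (S n))) (phi (S n))) as [-> | ->];
      [|unfold zero_at; rewrite Nat.eqb_refl]; reflexivity.
Qed.

Lemma is_poly_fun_zero_at_all d g phi n :
  is_poly_fun d g -> is_poly_fun d (fun l => g (zero_at_all phi n l)).
Proof.
  revert g; induction n as [|n IH]; intros g Hg; simpl.
  - apply is_poly_fun_zero_at; auto.
  - apply (is_poly_fun_zero_at d (fun l => g (zero_at_all phi n l))), IH; auto.
Qed.

Lemma is_poly_fun_split d g phi n : is_poly_fun d g ->
  exists G : nat -> (nat -> R) -> R, (forall i, is_poly_fun d (G i)) /\
    forall l, valid_params d l ->
      g l = g (zero_at_all phi n l) + sum_n (fun i => l (phi i) * G i l) n.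
Proof.
  intros Hg. induction n as [|n [G [HG HE]]].
  - destruct (is_poly_fun_peel d g (phi O) Hg) as [h [Hh Hp]].
    exists (fun _ => h). split; auto. intros l Hl. rewrite sum_O. apply Hp; auto.
  - destruct (is_poly_fun_peel d _ (phi (S n)) (is_poly_fun_zero_at_all d g phi n Hg))
      as [h [Hh Hp]].
    exists (fun i => if Nat.eqb i (S n) then h else G i). split.
    + intros i; destruct (Nat.eqb i (S n)); auto.
    + intros l Hl. rewrite (HE l Hl), (Hp l Hl), sum_Sn, Nat.eqb_refl.
      rewrite (sum_n_ext_loc (fun i => l (phi i) * (if Nat.eqb i (S n) then h else G i) l)
        (fun i => l (phi i) * G i l)).
      * unfold plus; simpl; ring.
      * intros i Hi. destruct (Nat.eqb_spec i (S n)); [lia|reflexivity].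
Qed.

Definition cpoly_eval (d : nat) (L : list ((R -> R) * (nat -> nat))) (l : nat -> R) (t : R) : R :=
  fold_right (fun ce acc => fst ce t * monomial d (snd ce) l + acc) 0 L.

Definition is_cpoly (d : nat) (g : (nat -> R) -> R -> R) : Prop :=
  exists L, (forall ce, In ce L -> forall t, continuous (fst ce) t) /\
    forall l, valid_params d l -> forall t, g l t = cpoly_eval d L l t.

Lemma cpoly_eval_app d L1 L2 l t :
  cpoly_eval d (L1 ++ L2) l t = cpoly_eval d L1 l t + cpoly_eval d L2 l t.
Proof. induction L1 as [|ce L1 IH]; simpl; [ring|]. rewrite IH; ring. Qed.

Lemma cpoly_eval_continuous d L l t :
  (forall ce, In ce L -> forall t, continuous (fst ce) t) -> continuous (cpoly_eval d L l) t.
Proof.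
  intros H; induction L as [|ce L IH]; simpl; [apply continuous_const|].
  apply (continuous_Rplus (fun x => fst ce x * monomial d (snd ce) l)).
  - apply continuous_Rmult; [apply H; simpl; auto|apply continuous_const].
  - apply IH; intros; apply H; simpl; auto.
Qed.

Lemma is_cpoly_ext d g g' :
  (forall l, valid_params d l -> forall t, g l t = g' l t) -> is_cpoly d g' -> is_cpoly d g.
Proof. intros H [L [HL1 HL2]]; exists L; split; auto. intros; rewrite H, HL2; auto. Qed.

Lemma is_cpoly_fun d (phi : R -> R) : (forall t, continuous phi t) -> is_cpoly d (fun _ t => phi t).
Proof.
  intros H. exists ((phi, fun _ => 0%nat) :: nil). split.
  - intros ce [<-|[]]; auto.
  - intros l Hl t; simpl. rewrite monomial_0; ring.
Qed.

Lemma is_cpoly_var d i : is_cpoly d (fun l _ => l i).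
Proof.
  destruct (le_dec 1 i) as [H1|H1]; [destruct (le_dec i d) as [H2|H2]|].
  - exists ((fun _ => 1, exp_unit i) :: nil). split.
    + intros ce [<-|[]]; intros; apply continuous_const.
    + intros l Hl t; simpl. rewrite monomial_unit by lia; ring.
  - exists nil. split; [intros _ []|]. intros l Hl t; simpl. apply Hl; lia.
  - exists nil. split; [intros _ []|]. intros l Hl t; simpl. apply Hl; lia.
Qed.

Lemma is_cpoly_plus d g1 g2 :
  is_cpoly d g1 -> is_cpoly d g2 -> is_cpoly d (fun l t => g1 l t + g2 l t).
Proof.
  intros [L1 [H1 E1]] [L2 [H2 E2]]. exists (L1 ++ L2). split.
  - intros ce Hce; apply in_app_or in Hce as [|]; auto.
  - intros l Hl t; rewrite cpoly_eval_app, E1, E2; auto.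
Qed.

Definition cterm_mul (a b : (R -> R) * (nat -> nat)) : (R -> R) * (nat -> nat) :=
  (fun t => fst a t * fst b t, fun i => (snd a i + snd b i)%nat).

Lemma cpoly_eval_map_mul d a L l t :
  cpoly_eval d (map (cterm_mul a) L) l t = fst a t * monomial d (snd a) l * cpoly_eval d L l t.
Proof. induction L as [|b L IH]; simpl; [ring|]. rewrite IH, monomial_add; ring. Qed.

Lemma is_cpoly_mult d g1 g2 :
  is_cpoly d g1 -> is_cpoly d g2 -> is_cpoly d (fun l t => g1 l t * g2 l t).
Proof.
  intros [L1 [H1 E1]] [L2 [H2 E2]]. exists (flat_map (fun a => map (cterm_mul a) L2) L1). split.
  - intros ce Hce. apply in_flat_map in Hce as [a [Ha Hb]].
    apply in_map_iff in Hb as [b [<- Hb]]. intros t; apply continuous_Rmult; auto.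
  - intros l Hl t; rewrite E1, E2 by auto. clear E1 E2 H1.
    induction L1 as [|a L1 IH]; simpl; [ring|].
    rewrite cpoly_eval_app, cpoly_eval_map_mul, <- IH. ring.
Qed.

Lemma is_cpoly_sum_n_m d (G : nat -> (nat -> R) -> R -> R) a b :
  (forall p, (a <= p <= b)%nat -> is_cpoly d (G p)) ->
  is_cpoly d (fun l t => sum_n_m (fun p => G p l t) a b).
Proof.
  intros H. induction b as [|b IH].
  - destruct a.
    + apply (is_cpoly_ext _ _ (G O)); [intros; rewrite sum_n_n; reflexivity|apply H; lia].
    + apply (is_cpoly_ext _ _ (fun _ _ => 0)); [|apply is_cpoly_fun; intros; apply continuous_const].
      intros; rewrite sum_n_m_zero by lia; reflexivity.
  - destruct (le_lt_dec a (S b)).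
    + destruct (Nat.eq_dec a (S b)) as [->|].
      * apply (is_cpoly_ext _ _ (G (S b))); [intros; rewrite sum_n_n; reflexivity|apply H; lia].
      * apply (is_cpoly_ext _ _ (fun l t => sum_n_m (fun p => G p l t) a b + G (S b) l t)).
        { intros; rewrite sum_n_Sm by lia; reflexivity. }
        apply (is_cpoly_plus d (fun l t => sum_n_m (fun p => G p l t) a b));
          [apply IH; intros|]; apply H; lia.
    + apply (is_cpoly_ext _ _ (fun _ _ => 0)); [|apply is_cpoly_fun; intros; apply continuous_const].
      intros; rewrite sum_n_m_zero by lia; reflexivity.
Qed.

Lemma is_cpoly_RInt d g : is_cpoly d g -> is_cpoly d (fun l t => RInt (fun s => g l s) 0 t).
Proof.
  intros [L [H E]]. exists (map (fun ce => (fun t => RInt (fst ce) 0 t, snd ce)) L). split.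
  - intros ce Hce. apply in_map_iff in Hce as [a [<- Ha]]. intros t; simpl.
    apply continuous_RInt_0_R; auto.
  - intros l Hl t. rewrite (RInt_ext _ (cpoly_eval d L l)) by (intros; apply E; auto). clear E.
    induction L as [|a L IH]; simpl.
    + rewrite (RInt_0_const 0). ring.
    + assert (Ha : forall t, continuous (fst a) t) by (intros; apply H; simpl; auto).
      rewrite (RInt_plus_R (fun x => fst a x * monomial d (snd a) l) (cpoly_eval d L l)),
        RInt_mult_const_R, IH by (auto; intros; try apply H; simpl; auto;
          first [apply continuous_Rmult; auto; apply continuous_const
                | apply cpoly_eval_continuous; intros; apply H; simpl; auto]).
      reflexivity.
Qed.

Lemma is_cpoly_continuous d g l t : is_cpoly d g -> valid_params d l -> continuous (g l) t.
Proof.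
  intros [L [H E]] Hl. apply (continuous_ext (cpoly_eval d L l)); [intros; symmetry; apply E; auto|].
  apply cpoly_eval_continuous; auto.
Qed.

Lemma is_cpoly_is_poly_fun d g t : is_cpoly d g -> is_poly_fun d (fun l => g l t).
Proof.
  intros [L [_ E]]. exists (map (fun ce => (fst ce t, snd ce)) L). intros l Hl. rewrite E by auto.
  clear. induction L as [|ce L IH]; simpl; auto. rewrite IH; reflexivity.
Qed.

(** * The coefficients of the inverse expansion *)

Definition pcoef (l : nat -> R) (t : R) (p : nat) : R := l p * cos t ^ p.

Definition scoef_of (T : nat -> (R -> R) * (R -> R)) (t : R) (j : nat) : R :=
  sin t * cos t * fst (T j) t + sin t ^ 2 * INR j * snd (T j) t.

(* [ucoef l k] is the candidate for [v_k] and [dcoef l k] its derivative; [coef_table l n]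
   tabulates both up to order [n].  The recursion expresses that
   [Phi(t, r) = sum_k ucoef l k t r^k] is constant along orbits: multiplying
   [d Phi/dt + d Phi/dr * dr/dt = 0] by the denominator of the polar equation gives
   [d Phi/dt = p(r cos t) (sin t cos t d Phi/dt + sin t^2 r d Phi/dr)], where
   [p(r cos t) = sum_p pcoef l t p r^p] has no constant term and [scoef] collects the
   coefficients of the bracket. *)
Fixpoint coef_table (l : nat -> R) (n : nat) : nat -> (R -> R) * (R -> R) :=
  match n with
  | O => fun _ => (fun _ => 0, fun _ => 0)
  | S m => fun j => if Nat.leb j m then coef_table l m j else
      let a := fun t => sum_n_m (fun p => pcoef l t p * scoef_of (coef_table l m) t (n - p)) 1 n in
      (a, fun t => (if Nat.eqb n 1 then 1 else 0) + RInt a 0 t)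
  end.

Definition dcoef (l : nat -> R) (k : nat) : R -> R := fst (coef_table l k k).
Definition ucoef (l : nat -> R) (k : nat) : R -> R := snd (coef_table l k k).
Definition scoef (l : nat -> R) (t : R) (j : nat) : R :=
  sin t * cos t * dcoef l j t + sin t ^ 2 * INR j * ucoef l j t.

Lemma coef_table_le l n j : (j <= n)%nat -> coef_table l n j = coef_table l j j.
Proof.
  induction n as [|n IH]; intros H; [replace j with O by lia; reflexivity|].
  cbn [coef_table]. destruct (Nat.leb_spec j n); [apply IH; auto|].
  replace j with (S n) by lia. cbn [coef_table].
  destruct (Nat.leb_spec (S n) n); [lia|reflexivity].
Qed.

Lemma dcoef_rec l k t : dcoef l k t = sum_n_m (fun p => pcoef l t p * scoef l t (k - p)) 1 k.
Proof.
  destruct k as [|k]; [rewrite sum_n_m_zero by lia; reflexivity|].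
  unfold dcoef at 1. cbn [coef_table]. destruct (Nat.leb_spec (S k) k); [lia|].
  apply sum_n_m_ext_loc. intros p Hp.
  unfold scoef_of, scoef, dcoef, ucoef. rewrite (coef_table_le l k (S k - p)) by lia.
  reflexivity.
Qed.

Lemma ucoef_rec l k t : ucoef l k t = (if Nat.eqb k 1 then 1 else 0) + RInt (dcoef l k) 0 t.
Proof.
  destruct k as [|k]; [unfold ucoef, dcoef; simpl; rewrite RInt_0_const; ring|].
  unfold ucoef at 1. cbn [coef_table]. destruct (Nat.leb_spec (S k) k); [lia|]. cbn [snd].
  f_equal. apply RInt_ext. intros x _. rewrite (dcoef_rec l (S k) x).
  apply sum_n_m_ext_loc. intros p Hp.
  unfold scoef_of, scoef, dcoef, ucoef. rewrite (coef_table_le l k (S k - p)) by lia.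
  reflexivity.
Qed.

Lemma ucoef_0 l t : ucoef l 0 t = 0.
Proof. reflexivity. Qed.

Lemma scoef_0 l t : scoef l t 0 = 0.
Proof. unfold scoef, dcoef, ucoef. simpl. ring. Qed.

Lemma is_cpoly_coefs d k : is_cpoly d (fun l t => dcoef l k t) /\ is_cpoly d (fun l t => ucoef l k t).
Proof.
  induction k as [k IH] using lt_wf_ind.
  assert (HA : is_cpoly d (fun l t => dcoef l k t)).
  { apply (is_cpoly_ext _ _ (fun l t => sum_n_m (fun p => pcoef l t p * scoef l t (k - p)) 1 k));
      [intros; apply dcoef_rec|].
    apply is_cpoly_sum_n_m. intros p Hp. apply is_cpoly_mult.
    - apply (is_cpoly_mult d (fun l _ => l p) (fun _ t => cos t ^ p)); [apply is_cpoly_var|].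
      apply is_cpoly_fun. intros; apply continuous_Rpow, continuous_cos.
    - destruct (IH (k - p)%nat) as [H1 H2]; [lia|]. unfold scoef.
      apply (is_cpoly_plus d (fun l t => sin t * cos t * dcoef l (k - p) t));
        [apply (is_cpoly_mult d (fun _ t => sin t * cos t))
        |apply (is_cpoly_mult d (fun _ t => sin t ^ 2 * INR (k - p)))]; auto;
        apply is_cpoly_fun; intros; apply continuous_Rmult;
        auto using continuous_sin, continuous_cos, continuous_Rpow, continuous_const. }
  split; auto.
  apply (is_cpoly_ext _ _ (fun l t => (if Nat.eqb k 1 then 1 else 0) + RInt (fun s => dcoef l k s) 0 t));
    [intros; apply ucoef_rec|].
  apply (is_cpoly_plus d (fun _ _ => if Nat.eqb k 1 then 1 else 0));
    [apply is_cpoly_fun; intros; apply continuous_const|].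
  apply (is_cpoly_RInt d (fun l t => dcoef l k t)); auto.
Qed.

Lemma dcoef_continuous d l k t : valid_params d l -> continuous (dcoef l k) t.
Proof. intros Hl. apply (is_cpoly_continuous d (fun l t => dcoef l k t)); auto. apply is_cpoly_coefs. Qed.

Lemma ucoef_derive d l k t : valid_params d l -> is_derive (ucoef l k) t (dcoef l k t).
Proof.
  intros Hl. apply (is_derive_ext (fun x => (if Nat.eqb k 1 then 1 else 0) + RInt (dcoef l k) 0 x));
    [intros; symmetry; apply ucoef_rec|].
  apply is_derive_const_add, is_derive_RInt_0. intros; eapply dcoef_continuous; eauto.
Qed.

Lemma ucoef_continuous d l k t : valid_params d l -> continuous (ucoef l k) t.
Proof. intros Hl. eapply is_derive_continuous_R, ucoef_derive, Hl. Qed.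

Lemma ucoef_at_0 l k : k <> 1%nat -> ucoef l k 0 = 0.
Proof.
  intros H. rewrite ucoef_rec, RInt_point. destruct (Nat.eqb_spec k 1); [lia|].
  unfold zero; simpl; ring.
Qed.

Lemma ucoef_1 l t : ucoef l 1 t = 1.
Proof.
  assert (H0 : forall x, dcoef l 1 x = 0).
  { intros x. rewrite dcoef_rec, sum_n_n. simpl. rewrite scoef_0. ring. }
  rewrite ucoef_rec, (RInt_ext _ (fun _ => 0)) by (intros; apply H0).
  rewrite RInt_0_const. simpl; ring.
Qed.

Lemma ucoef_vanish l k : (forall i, (1 <= i < k)%nat -> l i = 0) ->
  forall j t, (2 <= j <= k)%nat -> ucoef l j t = 0.
Proof.
  intros H j t Hj.
  assert (H0 : forall x, dcoef l j x = 0).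
  { intros x. rewrite dcoef_rec. apply sum_n_m_eq_0. intros p Hp. destruct (Nat.eq_dec p j) as [->|].
    - rewrite Nat.sub_diag, scoef_0. ring.
    - unfold pcoef. rewrite H by lia. ring. }
  rewrite ucoef_rec, (RInt_ext _ (fun _ => 0)) by (intros; apply H0).
  rewrite RInt_0_const. destruct (Nat.eqb_spec j 1); [lia|ring].
Qed.

(** * Reversibility *)

Lemma reflection_sym_of_derive (f a : R -> R) :
  (forall t, is_derive f t (a t)) -> (forall t, a (PI - t) = - a t) ->
  forall t, f (PI - t) = f t.
Proof.
  intros Hf Ha t.
  assert (H0 : forall t, is_derive (fun x => f (PI - x) - f x) t 0).
  { intros x. replace 0 with ((0 - 1) * a (PI - x) - a x) by (rewrite Ha; ring).
    apply is_derive_Rminus; auto.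
    apply (is_derive_comp f (fun x => PI - x)); [apply Hf|].
    apply is_derive_Rminus; [apply is_derive_const_R|apply is_derive_id_R]. }
  pose proof (const_of_derive_0 _ H0 t (PI / 2)) as E. cbv beta in E.
  replace (PI - PI / 2) with (PI / 2) in E by field. lra.
Qed.

(* [f (t + 2 PI) - f t] is constant, and the reflection sends its values at [0] and [-PI]
   to opposite numbers. *)
Lemma periodic_of_derive (f a : R -> R) :
  (forall t, is_derive f t (a t)) -> (forall t, a (t + 2 * PI) = a t) ->
  (forall t, f (PI - t) = f t) -> forall t, f (t + 2 * PI) = f t.
Proof.
  intros Hf Ha Hr t.
  assert (H0 : forall t, is_derive (fun x => f (x + 2 * PI) - f x) t 0).
  { intros x. replace 0 with ((1 + 0) * a (x + 2 * PI) - a x) by (rewrite Ha; ring).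
    apply is_derive_Rminus; auto.
    apply (is_derive_comp f (fun x => x + 2 * PI)); [apply Hf|].
    apply is_derive_Rplus; [apply is_derive_id_R|apply is_derive_const_R]. }
  pose proof (const_of_derive_0 _ H0 t 0) as E1.
  pose proof (const_of_derive_0 _ H0 0 (- PI)) as E2. cbv beta in E1, E2.
  pose proof (Hr 0) as E3. pose proof (Hr (- PI)) as E4.
  replace (PI - 0) with PI in E3 by ring. replace (PI - - PI) with (0 + 2 * PI) in E4 by ring.
  replace (- PI + 2 * PI) with PI in E2 by ring. lra.
Qed.

Lemma pow_opp_odd x m : (- x) ^ (2 * m + 1) = - x ^ (2 * m + 1).
Proof.
  induction m as [|m IH]; [simpl; ring|].
  replace (2 * S m + 1)%nat with (2 + (2 * m + 1))%nat by lia.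
  rewrite (pow_add (- x) 2), (pow_add x 2), IH. ring.
Qed.

Lemma sin_plus_2PI t : sin (t + 2 * PI) = sin t.
Proof. rewrite <- (sin_period t 1). f_equal. simpl; ring. Qed.

Lemma cos_plus_2PI t : cos (t + 2 * PI) = cos t.
Proof. rewrite <- (cos_period t 1). f_equal. simpl; ring. Qed.

Section Symmetry.

Variables (d k : nat) (l : nat -> R).
Hypothesis Hl : valid_params d l.
Hypothesis Hev : forall m, (1 <= m)%nat -> (2 * m < k)%nat -> l (2 * m)%nat = 0.

Lemma coefs_symmetric j : (j <= k)%nat ->
  (forall t, dcoef l j (PI - t) = - dcoef l j t) /\ (forall t, ucoef l j (PI - t) = ucoef l j t) /\
  (forall t, dcoef l j (t + 2 * PI) = dcoef l j t) /\ (forall t, ucoef l j (t + 2 * PI) = ucoef l j t).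
Proof.
  induction j as [j IH] using lt_wf_ind; intros Hj.
  assert (HS : forall m t, (m < j)%nat ->
    scoef l (PI - t) m = scoef l t m /\ scoef l (t + 2 * PI) m = scoef l t m).
  { intros m t Hm. destruct (IH m Hm ltac:(lia)) as [H1 [H2 [H3 H4]]]. unfold scoef.
    rewrite H1, H2, H3, H4, sin_PI_x, Rtrigo_facts.cos_pi_minus, sin_plus_2PI, cos_plus_2PI.
    split; ring. }
  assert (HA1 : forall t, dcoef l j (PI - t) = - dcoef l j t).
  { intros t. rewrite !dcoef_rec, <- sum_n_m_opp. apply sum_n_m_ext_loc_R. intros p Hp.
    rewrite (proj1 (HS (j - p)%nat t ltac:(lia))). unfold pcoef. rewrite Rtrigo_facts.cos_pi_minus.
    destruct (Nat.Even_or_Odd p) as [[m ->]|[m ->]].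
    - destruct (Nat.eq_dec (2 * m) j) as [<-|].
      + rewrite Nat.sub_diag, scoef_0. ring.
      + rewrite Hev by lia. ring.
    - rewrite pow_opp_odd. ring. }
  assert (HA2 : forall t, dcoef l j (t + 2 * PI) = dcoef l j t).
  { intros t. rewrite !dcoef_rec. apply sum_n_m_ext_loc. intros p Hp.
    rewrite (proj2 (HS (j - p)%nat t ltac:(lia))). unfold pcoef. rewrite cos_plus_2PI. reflexivity. }
  assert (HU1 : forall t, ucoef l j (PI - t) = ucoef l j t).
  { apply (reflection_sym_of_derive _ (dcoef l j)); auto. intros; eapply ucoef_derive; eauto. }
  repeat split; auto.
  apply (periodic_of_derive _ (dcoef l j)); auto. intros; eapply ucoef_derive; eauto.
Qed.

End Symmetry.

Lemma periodic_in_Z (f : R -> R) : (forall t, f (t + 2 * PI) = f t) ->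
  forall (m : Z) t, f (t - 2 * PI * IZR m) = f t.
Proof.
  intros H.
  assert (Hn : forall n t, f (t + 2 * PI * INR n) = f t).
  { induction n as [|n IH]; intros t; [simpl; f_equal; ring|].
    rewrite S_INR. replace (t + 2 * PI * (INR n + 1)) with (t + 2 * PI * INR n + 2 * PI) by ring.
    rewrite H; auto. }
  intros m t. destruct (Z_le_gt_dec 0 m).
  - rewrite <- (Z2Nat.id m), <- INR_IZR_INZ by lia.
    rewrite <- (Hn (Z.to_nat m) (t - 2 * PI * INR (Z.to_nat m))). f_equal; ring.
  - replace m with (- Z.of_nat (Z.to_nat (- m)))%Z by lia. rewrite opp_IZR, <- INR_IZR_INZ.
    rewrite <- (Hn (Z.to_nat (- m)) t). f_equal; ring.
Qed.

Lemma factor_through_sin (f : R -> R) : (forall t, f (t + 2 * PI) = f t) ->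
  (forall t, f (PI - t) = f t) -> forall t, f t = f (asin (sin t)).
Proof.
  intros Hp Hr t. pose proof PI_RGT_0 as HPI.
  set (m := (up ((t + PI / 2) / (2 * PI)) - 1)%Z).
  destruct (archimed ((t + PI / 2) / (2 * PI))) as [H1 H2].
  assert (Hm : IZR m <= (t + PI / 2) / (2 * PI) < IZR m + 1) by (unfold m; rewrite minus_IZR; lra).
  set (t' := t - 2 * PI * IZR m).
  assert (Ht' : - (PI / 2) <= t' < 3 * PI / 2).
  { unfold t'. destruct Hm as [Hm1 Hm2].
    apply Rmult_le_compat_r with (r := 2 * PI) in Hm1; [|lra].
    apply Rmult_lt_compat_r with (r := 2 * PI) in Hm2; [|lra].
    unfold Rdiv in Hm1, Hm2. rewrite Rmult_assoc, Rinv_l, Rmult_1_r in Hm1, Hm2 by lra. nra. }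
  rewrite <- (periodic_in_Z sin sin_plus_2PI m t), <- (periodic_in_Z f Hp m t). fold t'.
  destruct (Rle_dec t' (PI / 2)).
  - rewrite asin_sin by lra. reflexivity.
  - rewrite <- (sin_PI_x t'), asin_sin, Hr by lra. reflexivity.
Qed.

(** * Picard iteration *)

Lemma RInt_pow_0 (c : R) m t : RInt (fun s => c * s ^ m) 0 t = c * t ^ S m / INR (S m).
Proof.
  assert (HS : 0 < INR (S m)) by (apply lt_0_INR; lia).
  remember (INR (S m)) as K eqn:HK.
  apply is_RInt_unique.
  replace (c * t ^ S m / K) with (minus (c * t ^ S m / K) (c * 0 ^ S m / K))
    by (unfold minus, plus, opp; simpl; field; lra).
  apply (is_RInt_derive (fun s => c * s ^ S m / K)).
  - intros x _. apply is_derive_Reals.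
    apply (derivable_pt_lim_ext (mult_real_fct (c / K) (fun s => s ^ S m)));
      [intros; unfold mult_real_fct, Rdiv; ring|].
    replace (c * x ^ m) with (c / K * (INR (S m) * x ^ pred (S m)))
      by (rewrite <- HK; simpl; field; lra).
    apply derivable_pt_lim_scal, derivable_pt_lim_pow.
  - intros; apply continuous_Rmult; [apply continuous_const|apply continuous_Rpow, continuous_id].
Qed.

Lemma abs_RInt_0_le_pow (f : R -> R) c m t : (forall s, continuous f s) ->
  (forall s, Rabs (f s) <= c * Rabs s ^ m) -> Rabs (RInt f 0 t) <= c * Rabs t ^ S m / INR (S m).
Proof.
  assert (Hpos : forall f t, (forall s, continuous f s) -> (forall s, Rabs (f s) <= c * Rabs s ^ m) ->
    0 <= t -> Rabs (RInt f 0 t) <= c * t ^ S m / INR (S m)).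
  { clear f t. intros f t Hc H Ht.
    assert (Hcf : forall s, continuous (fun x => Rabs (f x)) s)
      by (intros; apply continuous_Rabs_comp, Hc).
    eapply Rle_trans; [apply abs_RInt_le; auto; apply ex_RInt_continuous_R; auto|].
    rewrite <- RInt_pow_0. apply RInt_le; auto; try apply ex_RInt_continuous_R; auto.
    - intros; apply continuous_Rmult; [apply continuous_const|apply continuous_Rpow, continuous_id].
    - intros x Hx. rewrite <- (Rabs_right x) at 2 by lra. apply H. }
  intros Hc H. destruct (Rle_dec 0 t).
  - rewrite (Rabs_right t) by lra. apply Hpos; auto.
  - rewrite (Rabs_left t) by lra.
    pose proof (RInt_comp_lin f (-1) 0 0 (- t)) as E. unfold scal in E; simpl in E; unfold mult in E; simpl in E.
    replace (-1 * 0 + 0) with 0 in E by ring. replace (-1 * - t + 0) with t in E by ring.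
    rewrite <- E by (apply ex_RInt_continuous_R; auto).
    rewrite (RInt_ext _ (fun y => f (- y) * -1)) by (intros; rewrite Rmult_comm; do 2 f_equal; ring).
    assert (Hc' : forall s, continuous (fun y => f (- y)) s).
    { intros s. apply (continuous_comp (fun y => - y) f); [|apply Hc].
      apply (continuous_ext (fun y => -1 * y)); [intros; simpl; ring|].
      apply continuous_Rmult; [apply continuous_const|apply continuous_id]. }
    rewrite RInt_mult_const_R, Rabs_mult by auto.
    replace (Rabs (-1)) with 1 by (rewrite Rabs_left; lra). rewrite Rmult_1_r.
    apply Hpos; auto; [|lra]. intros s. rewrite <- (Rabs_Ropp s). apply H.
Qed.

Lemma abs_RInt_le_const_R (f : R -> R) a b M : (forall t, continuous f t) ->
  (forall s, Rmin a b <= s <= Rmax a b -> Rabs (f s) <= M) -> Rabs (RInt f a b) <= M * Rabs (b - a).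
Proof.
  intros Hc H. destruct (Rle_dec a b).
  - rewrite Rmin_left, Rmax_right in H by lra. rewrite (Rabs_right (b - a)) by lra.
    rewrite Rmult_comm. apply abs_RInt_le_const; [lra|apply ex_RInt_continuous_R|]; auto.
  - rewrite Rmin_right, Rmax_left in H by lra. rewrite (Rabs_left (b - a)) by lra.
    rewrite <- (opp_RInt_swap f b a) by (apply ex_RInt_continuous_R; auto).
    change (Rabs (- RInt f b a) <= M * - (b - a)). rewrite Rabs_Ropp.
    replace (M * - (b - a)) with ((a - b) * M) by ring.
    apply abs_RInt_le_const; [lra|apply ex_RInt_continuous_R|]; auto.
Qed.

Lemma RInt_0_minus (f : R -> R) s t : (forall t, continuous f t) ->
  RInt f 0 s - RInt f 0 t = RInt f t s.
Proof.
  intros H. rewrite <- (RInt_Chasles f 0 t s) by (apply ex_RInt_continuous_R; auto).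
  unfold plus; simpl; ring.
Qed.

Lemma continuous_R_eps (f : R -> R) x : continuous f x <->
  forall eps, 0 < eps -> exists del, 0 < del /\
    forall y, Rabs (y - x) < del -> Rabs (f y - f x) < eps.
Proof.
  split.
  - intros H%continuity_pt_filterlim eps Heps. destruct (H eps Heps) as [del [Hd H2]]. exists del; split; auto.
    intros y Hy. destruct (Req_dec y x) as [->|Hne]; [rewrite Rminus_eq_0, Rabs_R0; auto|].
    apply (H2 y). split; [split; [exact I|auto]|exact Hy].
  - intros H. apply continuity_pt_filterlim. intros eps Heps. destruct (H eps Heps) as [del [Hd H2]].
    exists del; split; auto. intros y [_ Hy]. apply H2, Hy.
Qed.

Lemma half_pow_lt e : 0 < e -> exists N, (/ 2) ^ N < e.
Proof.
  intros He. destruct (pow_lt_1_zero (/ 2) ltac:(rewrite Rabs_right; lra) e He) as [N HN].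
  exists N. specialize (HN N (le_n N)). rewrite Rabs_right in HN; auto.
  apply Rle_ge, pow_le; lra.
Qed.

Lemma le_0_of_le_half_pow (a K : R) : 0 <= K -> (forall n, a <= K * (/ 2) ^ n) -> a <= 0.
Proof.
  intros HK H. apply Rle_plus_epsilon. intros eps Heps.
  destruct (half_pow_lt (eps / (K + 1))) as [N HN]; [apply Rdiv_lt_0_compat; lra|].
  specialize (H N). apply Rmult_lt_compat_l with (r := K + 1) in HN; [|lra].
  replace ((K + 1) * (eps / (K + 1))) with eps in HN by (field; lra).
  pose proof (pow_le (/ 2) N ltac:(lra)). nra.
Qed.

Lemma geometric_cauchy_lim (u : nat -> R) C : (forall n, Rabs (u (S n) - u n) <= C * (/ 2) ^ n) ->
  is_lim_seq u (real (Lim_seq u)) /\ forall n, Rabs (real (Lim_seq u) - u n) <= 2 * C * (/ 2) ^ n.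
Proof.
  intros H. pose proof (Rle_trans _ _ _ (Rabs_pos _) (H O)) as HC. rewrite pow_O, Rmult_1_r in HC.
  assert (Hnm : forall n m, (n <= m)%nat -> Rabs (u m - u n) <= 2 * C * (/ 2) ^ n).
  { intros n m Hnm. replace m with (n + (m - n))%nat by lia.
    enough (forall p, Rabs (u (n + p)%nat - u n) <= 2 * C * (/ 2) ^ n - 2 * C * (/ 2) ^ (n + p))
      by (pose proof (pow_le (/ 2) (n + (m - n)) ltac:(lra)); pose proof (H0 (m - n)%nat); nra).
    induction p as [|p IH]; [rewrite Nat.add_0_r, Rminus_eq_0, Rabs_R0; lra|].
    rewrite Nat.add_succ_r.
    replace (u (S (n + p)) - u n) with ((u (S (n + p)) - u (n + p)%nat) + (u (n + p)%nat - u n)) by ring.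
    eapply Rle_trans; [apply Rabs_triang|]. pose proof (H (n + p)%nat).
    replace ((/ 2) ^ S (n + p)) with (/ 2 * (/ 2) ^ (n + p)) by reflexivity. lra. }
  assert (Hl : is_lim_seq u (real (Lim_seq u))).
  { apply Lim_seq_correct', ex_lim_seq_cauchy_corr. intros eps.
    destruct (half_pow_lt (eps / (2 * C + 1))) as [N HN]; [apply Rdiv_lt_0_compat; [apply cond_pos|lra]|].
    exists N. intros a b Ha Hb.
    assert (HN' : 2 * C * (/ 2) ^ N < eps).
    { apply Rmult_lt_compat_l with (r := 2 * C + 1) in HN; [|lra].
      replace ((2 * C + 1) * (eps / (2 * C + 1))) with (pos eps) in HN by (field; lra).
      pose proof (pow_le (/ 2) N ltac:(lra)). nra. }
    assert (HNn : forall n, (N <= n)%nat -> (/ 2) ^ n <= (/ 2) ^ N).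
    { intros n Hn. induction Hn; [lra|]. simpl. pose proof (pow_le (/ 2) m ltac:(lra)). lra. }
    destruct (le_lt_dec a b).
    - rewrite Rabs_minus_sym. eapply Rle_lt_trans; [apply Hnm; auto|]. pose proof (HNn a Ha). nra.
    - eapply Rle_lt_trans; [apply Hnm; lia|]. pose proof (HNn b Hb). nra. }
  split; auto. intros n.
  apply Rle_plus_epsilon. intros eps Heps. apply is_lim_seq_Reals in Hl.
  destruct (Hl eps Heps) as [N HN]. specialize (HN (max N n) (Nat.le_max_l N n)). unfold R_dist in HN.
  replace (real (Lim_seq u) - u n) with (- (u (max N n) - Lim_seq u) + (u (max N n) - u n)) by ring.
  eapply Rle_trans; [apply Rabs_triang|]. rewrite Rabs_Ropp.
  pose proof (Hnm n (max N n) (Nat.le_max_r N n)). lra.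
Qed.

Lemma pow_div_fact_le_half_pow (c : R) : exists C, forall n, c ^ n / INR (fact n) <= C * (/ 2) ^ n.
Proof.
  destruct (cv_speed_pow_fact (2 * c) 1 ltac:(lra)) as [N HN].
  assert (Hfin : exists C, forall n, (n < N)%nat -> (2 * c) ^ n / INR (fact n) <= C).
  { clear HN. induction N as [|N [C HC]]; [exists 0; intros; lia|].
    exists (Rmax C ((2 * c) ^ N / INR (fact N))). intros n Hn.
    destruct (Nat.eq_dec n N) as [->|]; [apply Rmax_r|].
    eapply Rle_trans; [apply HC; lia|apply Rmax_l]. }
  destruct Hfin as [C HC]. exists (Rmax C 1). intros n.
  assert (HF : INR (fact n) <> 0) by apply INR_fact_neq_0.
  replace (c ^ n / INR (fact n)) with ((2 * c) ^ n / INR (fact n) * (/ 2) ^ n)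
    by (rewrite Rpow_mult_distr, pow_inv; field; split; auto; apply pow_nonzero; lra).
  apply Rmult_le_compat_r; [apply pow_le; lra|].
  destruct (le_lt_dec N n) as [Hn|Hn].
  - specialize (HN n Hn). unfold R_dist in HN. rewrite Rminus_0_r in HN.
    apply Rabs_def2 in HN. pose proof (Rmax_r C 1). lra.
  - eapply Rle_trans; [apply HC; auto|apply Rmax_l].
Qed.

Section Picard.

Variables (G : R -> R -> R) (B L x0 : R).
Hypothesis G_bounded : forall t x, Rabs (G t x) <= B.
Hypothesis G_lipschitz : forall t x y, Rabs (G t x - G t y) <= L * Rabs (x - y).
Hypothesis G_continuous : forall x t, continuous (fun s => G s x) t.

Lemma bound_nonneg : 0 <= B.
Proof. eapply Rle_trans; [apply Rabs_pos|apply (G_bounded 0 0)]. Qed.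

Lemma lipschitz_nonneg : 0 <= L.
Proof.
  pose proof (G_lipschitz 0 1 0). pose proof (Rabs_pos (G 0 1 - G 0 0)).
  rewrite Rminus_0_r, Rabs_R1 in H. lra.
Qed.

Lemma continuous_G_comp (y : R -> R) :
  (forall t, continuous y t) -> forall t, continuous (fun s => G s (y s)) t.
Proof.
  intros Hy t. apply continuous_R_eps. intros eps Heps. pose proof lipschitz_nonneg.
  destruct (proj1 (continuous_R_eps _ _) (G_continuous (y t) t) (eps / 2)) as [d1 [Hd1 H1]]; [lra|].
  destruct (proj1 (continuous_R_eps _ _) (Hy t) (eps / 2 / (L + 1))) as [d2 [Hd2 H2]];
    [apply Rdiv_lt_0_compat; lra|].
  exists (Rmin d1 d2). split; [apply Rmin_glb_lt; auto|]. intros s Hs.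
  specialize (H1 s (Rlt_le_trans _ _ _ Hs (Rmin_l _ _))).
  specialize (H2 s (Rlt_le_trans _ _ _ Hs (Rmin_r _ _))).
  pose proof (G_lipschitz s (y s) (y t)).
  replace (G s (y s) - G t (y t)) with ((G s (y s) - G s (y t)) + (G s (y t) - G t (y t))) by ring.
  eapply Rle_lt_trans; [apply Rabs_triang|].
  assert (L * Rabs (y s - y t) <= eps / 2).
  { apply Rle_trans with ((L + 1) * (eps / 2 / (L + 1))); [|right; field; lra].
    apply Rmult_le_compat; try lra. apply Rabs_pos. }
  lra.
Qed.

Fixpoint picard_iter (n : nat) : R -> R :=
  match n with
  | O => fun _ => x0
  | S m => fun t => x0 + RInt (fun s => G s (picard_iter m s)) 0 t
  end.

Lemma picard_iter_continuous n t : continuous (picard_iter n) t.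
Proof.
  revert t; induction n as [|n IH]; intros t; [apply continuous_const|].
  apply (continuous_Rplus (fun _ => x0)); [apply continuous_const|].
  apply continuous_RInt_0_R, continuous_G_comp; auto.
Qed.

Lemma picard_iter_lipschitz n s t : Rabs (picard_iter n s - picard_iter n t) <= B * Rabs (s - t).
Proof.
  pose proof bound_nonneg. destruct n as [|n]; simpl.
  - rewrite Rminus_eq_0, Rabs_R0. apply Rmult_le_pos; auto; apply Rabs_pos.
  - rewrite Rminus_plus_l_l, RInt_0_minus by (apply continuous_G_comp, picard_iter_continuous).
    apply abs_RInt_le_const_R; auto. apply continuous_G_comp, picard_iter_continuous.
Qed.

Lemma picard_iter_step n t :
  Rabs (picard_iter (S n) t - picard_iter n t) <= B * L ^ n * Rabs t ^ S n / INR (fact (S n)).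
Proof.
  pose proof bound_nonneg. pose proof lipschitz_nonneg. revert t; induction n as [|n IH]; intros t.
  - simpl picard_iter. rewrite Rplus_minus_l.
    eapply Rle_trans; [apply (abs_RInt_0_le_pow _ B 0)|simpl; lra].
    + intros; apply continuous_G_comp; intros; apply continuous_const.
    + intros s; simpl; rewrite Rmult_1_r; auto.
  - change (picard_iter (S (S n)) t - picard_iter (S n) t) with
      ((x0 + RInt (fun s => G s (picard_iter (S n) s)) 0 t) - (x0 + RInt (fun s => G s (picard_iter n s)) 0 t)).
    rewrite Rminus_plus_l_l, <- RInt_minus_R by (apply continuous_G_comp, picard_iter_continuous).
    assert (HF : 0 < INR (fact (S n))) by (apply lt_0_INR, lt_O_fact).
    eapply Rle_trans; [apply (abs_RInt_0_le_pow _ (B * L ^ S n / INR (fact (S n))) (S n))|].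
    + intros; apply continuous_Rminus; apply continuous_G_comp, picard_iter_continuous.
    + intros s. eapply Rle_trans; [apply G_lipschitz|].
      apply Rle_trans with (L * (B * L ^ n * Rabs s ^ S n / INR (fact (S n)))).
      * apply Rmult_le_compat_l; [lra|apply IH].
      * right. simpl pow. field. lra.
    + right. assert (0 < INR (S (S n))) by (apply lt_0_INR; lia).
      rewrite (fact_simpl (S n)), mult_INR. field. split; lra.
Qed.

Lemma picard_iter_step_le_half_pow tau : 0 <= tau -> exists C,
  forall n t, Rabs t <= tau -> Rabs (picard_iter (S n) t - picard_iter n t) <= C * (/ 2) ^ n.
Proof.
  intros Htau. pose proof bound_nonneg. pose proof lipschitz_nonneg.
  destruct (pow_div_fact_le_half_pow (L * tau)) as [C HC].
  exists (B * tau * C). intros n t Ht. eapply Rle_trans; [apply picard_iter_step|].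
  assert (HF : 0 < INR (fact n)) by (apply lt_0_INR, lt_O_fact).
  assert (HF1 : INR (fact n) <= INR (fact (S n))).
  { rewrite fact_simpl, mult_INR, S_INR. pose proof (pos_INR n). nra. }
  apply Rle_trans with (B * tau * ((L * tau) ^ n / INR (fact n))).
  - assert (Hp : 0 <= B * L ^ n * Rabs t ^ S n) by (pose proof (Rabs_pos t);
      repeat apply Rmult_le_pos; auto; apply pow_le; auto).
    apply Rle_trans with (B * L ^ n * Rabs t ^ S n / INR (fact n)).
    + apply Rmult_le_compat_l; auto. apply Rinv_le_contravar; auto.
    + rewrite Rpow_mult_distr. unfold Rdiv. rewrite <- tech_pow_Rmult.
      replace (B * tau * (L ^ n * tau ^ n * / INR (fact n))) with
        (B * L ^ n * (tau * tau ^ n) * / INR (fact n)) by ring.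
      apply Rmult_le_compat_r; [left; apply Rinv_0_lt_compat; auto|].
      apply Rmult_le_compat_l; [apply Rmult_le_pos; auto; apply pow_le; auto|].
      pose proof (Rabs_pos t). apply Rmult_le_compat; auto; try apply pow_le; auto.
      apply pow_incr; auto.
  - rewrite (Rmult_assoc (B * tau) C). apply Rmult_le_compat_l; [nra|auto].
Qed.

Definition picard_lim (t : R) : R := real (Lim_seq (fun n => picard_iter n t)).

Lemma picard_lim_close tau : 0 <= tau -> exists C, 0 <= C /\ forall n t, Rabs t <= tau ->
  Rabs (picard_lim t - picard_iter n t) <= C * (/ 2) ^ n.
Proof.
  intros Htau. destruct (picard_iter_step_le_half_pow tau Htau) as [C HC].
  exists (Rmax 0 (2 * C)). split; [apply Rmax_l|]. intros n t Ht.
  eapply Rle_trans; [apply (geometric_cauchy_lim (fun n => picard_iter n t) C); auto|].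
  apply Rmult_le_compat_r; [apply pow_le; lra|apply Rmax_r].
Qed.

Lemma picard_lim_lipschitz s t : Rabs (picard_lim s - picard_lim t) <= B * Rabs (s - t).
Proof.
  destruct (picard_lim_close (Rmax (Rabs s) (Rabs t))) as [C [HC0 HC]];
    [eapply Rle_trans; [apply Rabs_pos|apply Rmax_l]|].
  cut (Rabs (picard_lim s - picard_lim t) - B * Rabs (s - t) <= 0); [lra|].
  apply (le_0_of_le_half_pow _ (2 * C)); [lra|]. intros n.
  pose proof (HC n s (Rmax_l _ _)). pose proof (HC n t (Rmax_r _ _)).
  pose proof (picard_iter_lipschitz n s t).
  rewrite Rabs_minus_sym in H0.
  replace (picard_lim s - picard_lim t) with ((picard_lim s - picard_iter n s)
    + (picard_iter n s - picard_iter n t) + (picard_iter n t - picard_lim t)) by ring.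
  pose proof (Rabs_triang (picard_lim s - picard_iter n s) (picard_iter n s - picard_iter n t)).
  pose proof (Rabs_triang ((picard_lim s - picard_iter n s) + (picard_iter n s - picard_iter n t))
    (picard_iter n t - picard_lim t)).
  lra.
Qed.

Lemma picard_lim_continuous t : continuous picard_lim t.
Proof.
  apply continuous_R_eps. intros eps Heps. pose proof bound_nonneg.
  exists (eps / (B + 1)). split; [apply Rdiv_lt_0_compat; lra|]. intros y Hy.
  eapply Rle_lt_trans; [apply picard_lim_lipschitz|].
  apply Rle_lt_trans with ((B + 1) * Rabs (y - t)); [pose proof (Rabs_pos (y - t)); nra|].
  replace eps with ((B + 1) * (eps / (B + 1))) by (field; lra). apply Rmult_lt_compat_l; lra.
Qed.

Lemma picard_lim_integral t : picard_lim t = x0 + RInt (fun s => G s (picard_lim s)) 0 t.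
Proof.
  destruct (picard_lim_close (Rabs t)) as [C [HC0 HC]]; [apply Rabs_pos|].
  pose proof lipschitz_nonneg. pose proof (Rabs_pos t).
  cut (Rabs (picard_lim t - (x0 + RInt (fun s => G s (picard_lim s)) 0 t)) <= 0);
    [intros; apply Rminus_diag_uniq, Rabs_eq_0; pose proof (Rabs_pos
      (picard_lim t - (x0 + RInt (fun s => G s (picard_lim s)) 0 t))); lra|].
  apply (le_0_of_le_half_pow _ (C + L * C * Rabs t));
    [assert (0 <= L * C * Rabs t) by (repeat apply Rmult_le_pos; auto); lra|]. intros n.
  replace (picard_lim t - (x0 + RInt (fun s => G s (picard_lim s)) 0 t)) with
    ((picard_lim t - picard_iter (S n) t)
     + RInt (fun s => G s (picard_iter n s) - G s (picard_lim s)) 0 t)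
    by (rewrite RInt_minus_R by (apply continuous_G_comp;
          first [apply picard_iter_continuous | apply picard_lim_continuous]); simpl; ring).
  eapply Rle_trans; [apply Rabs_triang|].
  pose proof (HC (S n) t (Rle_refl _)) as H1.
  assert (H2 : Rabs (RInt (fun s => G s (picard_iter n s) - G s (picard_lim s)) 0 t)
    <= L * (C * (/ 2) ^ n) * Rabs (t - 0)).
  { apply abs_RInt_le_const_R.
    - intros; apply continuous_Rminus; apply continuous_G_comp;
        first [apply picard_iter_continuous | apply picard_lim_continuous].
    - intros s Hs. eapply Rle_trans; [apply G_lipschitz|]. apply Rmult_le_compat_l; auto.
      rewrite Rabs_minus_sym. apply HC.
      unfold Rmin, Rmax in Hs. destruct Rle_dec; unfold Rabs; repeat destruct Rcase_abs; lra. }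
  rewrite Rminus_0_r in H2. simpl pow in H1. pose proof (pow_le (/ 2) n ltac:(lra)). nra.
Qed.

Theorem picard_solution : exists y : R -> R, y 0 = x0 /\
  (forall t, is_derive y t (G t (y t))) /\ forall t, Rabs (y t - x0) <= B * Rabs t.
Proof.
  exists picard_lim.
  assert (Hb : forall t, Rabs (picard_lim t - x0) <= B * Rabs t).
  { intros t. rewrite picard_lim_integral, Rplus_minus_l.
    replace (Rabs t) with (Rabs (t - 0)) by (rewrite Rminus_0_r; reflexivity). apply abs_RInt_le_const_R; auto.
    apply continuous_G_comp, picard_lim_continuous. }
  split; [|split; auto].
  - pose proof (Hb 0) as H0. rewrite Rabs_R0, Rmult_0_r in H0.
    pose proof (Rabs_pos (picard_lim 0 - x0)).
    apply Rminus_diag_uniq, Rabs_eq_0. lra.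
  - intros t. apply (is_derive_ext (fun t => x0 + RInt (fun s => G s (picard_lim s)) 0 t));
      [intros; symmetry; apply picard_lim_integral|].
    apply is_derive_const_add, (is_derive_RInt_0 (fun s => G s (picard_lim s))).
    apply continuous_G_comp, picard_lim_continuous.
Qed.

End Picard.

(** * Solutions of the polar equation *)

Definition pnorm (d : nat) (l : nat -> R) := sum_n_m (fun i => Rabs (l i)) 1 d.
Definition dpnorm (d : nat) (l : nat -> R) := sum_n_m (fun i => INR i * Rabs (l i)) 1 d.

Lemma sum_n_m_1_S (f : nat -> R) d : sum_n_m f 1 (S d) = sum_n_m f 1 d + f (S d).
Proof. rewrite sum_n_Sm by lia. reflexivity. Qed.

Lemma sum_n_m_1_0 (f : nat -> R) : sum_n_m f 1 0 = 0.
Proof. rewrite sum_n_m_zero by lia. reflexivity. Qed.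

Lemma pnorm_nonneg d l : 0 <= pnorm d l.
Proof.
  unfold pnorm; induction d; [rewrite sum_n_m_1_0; lra|].
  rewrite sum_n_m_1_S. pose proof (Rabs_pos (l (S d))). lra.
Qed.

Lemma dpnorm_nonneg d l : 0 <= dpnorm d l.
Proof.
  unfold dpnorm; induction d; [rewrite sum_n_m_1_0; lra|].
  rewrite sum_n_m_1_S. pose proof (Rabs_pos (l (S d))). pose proof (pos_INR (S d)). nra.
Qed.

Lemma pow_le_1 (a : R) n : 0 <= a <= 1 -> a ^ n <= 1.
Proof. intros H. rewrite <- (pow1 n). apply pow_incr; lra. Qed.

Lemma abs_pow_le_abs (x : R) i : Rabs x <= 1 -> (1 <= i)%nat -> Rabs (x ^ i) <= Rabs x.
Proof.
  intros H Hi. rewrite <- RPow_abs. destruct i as [|i]; [lia|]. simpl.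
  pose proof (pow_le_1 (Rabs x) i ltac:(split; auto; apply Rabs_pos)). pose proof (Rabs_pos x). nra.
Qed.

Lemma abs_pow_sub_le (x y : R) i : Rabs x <= 1 -> Rabs y <= 1 ->
  Rabs (x ^ i - y ^ i) <= INR i * Rabs (x - y).
Proof.
  intros Hx Hy. induction i as [|i IH]; [simpl; rewrite Rminus_eq_0, Rabs_R0; lra|].
  replace (x ^ S i - y ^ S i) with (x * (x ^ i - y ^ i) + y ^ i * (x - y)) by (simpl; ring).
  eapply Rle_trans; [apply Rabs_triang|]. rewrite !Rabs_mult, S_INR.
  assert (Rabs (y ^ i) <= 1) by (rewrite <- RPow_abs; apply pow_le_1; split; auto; apply Rabs_pos).
  pose proof (Rabs_pos (x ^ i - y ^ i)). pose proof (Rabs_pos (x - y)). pose proof (Rabs_pos x).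
  pose proof (Rabs_pos (y ^ i)). nra.
Qed.

Lemma abs_pL_le d l x : Rabs x <= 1 -> Rabs (pL d l x) <= pnorm d l * Rabs x.
Proof.
  intros Hx. unfold pL, pnorm. induction d as [|d IH]; [rewrite !sum_n_m_1_0, Rabs_R0; lra|].
  rewrite !sum_n_m_1_S. eapply Rle_trans; [apply Rabs_triang|]. rewrite Rabs_mult.
  pose proof (abs_pow_le_abs x (S d) Hx ltac:(lia)). pose proof (Rabs_pos (l (S d))). nra.
Qed.

Lemma pL_lipschitz d l x y : Rabs x <= 1 -> Rabs y <= 1 ->
  Rabs (pL d l x - pL d l y) <= dpnorm d l * Rabs (x - y).
Proof.
  intros Hx Hy. unfold pL, dpnorm. induction d as [|d IH].
  { rewrite !sum_n_m_1_0, Rminus_eq_0, Rabs_R0. lra. }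
  rewrite !sum_n_m_1_S.
  replace (sum_n_m (fun i => l i * x ^ i) 1 d + l (S d) * x ^ S d -
    (sum_n_m (fun i => l i * y ^ i) 1 d + l (S d) * y ^ S d)) with
    ((sum_n_m (fun i => l i * x ^ i) 1 d - sum_n_m (fun i => l i * y ^ i) 1 d)
     + l (S d) * (x ^ S d - y ^ S d)) by ring.
  eapply Rle_trans; [apply Rabs_triang|]. rewrite Rabs_mult.
  pose proof (abs_pow_sub_le x y (S d) Hx Hy). pose proof (Rabs_pos (l (S d))). nra.
Qed.

Lemma continuous_pL_cos d l (c : R) t : continuous (fun t => pL d l (c * cos t)) t.
Proof.
  apply (continuous_sum_n_m (fun i t => l i * (c * cos t) ^ i)). intros p _.
  apply continuous_Rmult; [apply continuous_const|].
  apply continuous_Rpow, continuous_Rmult; [apply continuous_const|apply continuous_cos].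
Qed.

Lemma abs_sin_le_1 t : Rabs (sin t) <= 1.
Proof. pose proof (SIN_bound t). apply Rabs_le; lra. Qed.

Lemma abs_cos_le_1 t : Rabs (cos t) <= 1.
Proof. pose proof (COS_bound t). apply Rabs_le; lra. Qed.

Lemma abs_mul_cos_le x t : Rabs (x * cos t) <= Rabs x.
Proof.
  rewrite Rabs_mult. pose proof (abs_cos_le_1 t). pose proof (Rabs_pos x).
  pose proof (Rabs_pos (cos t)). nra.
Qed.

Lemma abs_pL_cos_le d l t x : Rabs x <= 1 -> Rabs (pL d l (x * cos t)) <= pnorm d l * Rabs x.
Proof.
  intros H. pose proof (abs_mul_cos_le x t). eapply Rle_trans; [apply abs_pL_le; lra|].
  apply Rmult_le_compat_l; auto. apply pnorm_nonneg.
Qed.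

Lemma abs_sin_cos_pL_le d l t x : Rabs x <= 1 ->
  Rabs (sin t * cos t * pL d l (x * cos t)) <= pnorm d l * Rabs x.
Proof.
  intros H. rewrite !Rabs_mult. pose proof (abs_pL_cos_le d l t x H).
  pose proof (abs_sin_le_1 t). pose proof (abs_cos_le_1 t). pose proof (Rabs_pos (sin t)).
  pose proof (Rabs_pos (cos t)). pose proof (Rabs_pos (pL d l (x * cos t))).
  assert (Rabs (sin t) * Rabs (cos t) <= 1) by nra. nra.
Qed.

Lemma abs_denL_bounds d l t x : Rabs x <= 1 -> pnorm d l * Rabs x <= 1 / 2 ->
  1 / 2 <= Rabs (denL d l t x) <= 3 / 2.
Proof.
  intros H1 H2. pose proof (abs_sin_cos_pL_le d l t x H1). unfold denL.
  pose proof (Rabs_triang (-1) (sin t * cos t * pL d l (x * cos t))).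
  pose proof (Rabs_triang_inv (-1) (- (sin t * cos t * pL d l (x * cos t)))).
  rewrite Rabs_Ropp in H3. unfold Rminus in H3. rewrite Ropp_involutive in H3.
  replace (Rabs (-1)) with 1 in * by (rewrite Rabs_left; lra). lra.
Qed.

Definition clamp (rho x : R) : R := Rmax (- rho) (Rmin rho x).

Lemma abs_clamp_le rho x : 0 <= rho -> Rabs (clamp rho x) <= rho.
Proof. intros H. unfold clamp, Rmax, Rmin. repeat destruct Rle_dec; apply Rabs_le; lra. Qed.

Lemma clamp_lipschitz rho x y : 0 <= rho -> Rabs (clamp rho x - clamp rho y) <= Rabs (x - y).
Proof.
  intros H. unfold clamp, Rmax, Rmin.
  repeat destruct Rle_dec; unfold Rabs; repeat destruct Rcase_abs; lra.
Qed.

Lemma clamp_id rho x : Rabs x <= rho -> clamp rho x = x.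
Proof. intros H. apply Rabs_le_between in H. unfold clamp, Rmax, Rmin. repeat destruct Rle_dec; lra. Qed.

Lemma quotient_lipschitz (Na Nb Da Db K1 K2 e : R) :
  1 / 2 <= Rabs Da -> 1 / 2 <= Rabs Db <= 3 / 2 -> Rabs Nb <= 1 / 2 ->
  Rabs (Na - Nb) <= K1 * e -> Rabs (Da - Db) <= K2 * e ->
  Rabs (Na / Da - Nb / Db) <= 4 * (3 / 2 * K1 + 1 / 2 * K2) * e.
Proof.
  intros H1 [H2 H3] H4 H5 H6.
  assert (Da <> 0) by (intros ->; rewrite Rabs_R0 in H1; lra).
  assert (Db <> 0) by (intros ->; rewrite Rabs_R0 in H2; lra).
  replace (Na / Da - Nb / Db) with (((Na - Nb) * Db + Nb * (Db - Da)) * (/ Da * / Db))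
    by (field; auto).
  rewrite !Rabs_mult, !Rabs_inv.
  assert (Hinv : / Rabs Da * / Rabs Db <= 4).
  { replace 4 with (/ (1 / 2) * / (1 / 2)) by field.
    apply Rmult_le_compat; try (left; apply Rinv_0_lt_compat; lra); apply Rinv_le_contravar; lra. }
  assert (Rabs ((Na - Nb) * Db + Nb * (Db - Da)) <= (3 / 2 * K1 + 1 / 2 * K2) * e).
  { eapply Rle_trans; [apply Rabs_triang|]. rewrite !Rabs_mult, (Rabs_minus_sym Db Da).
    pose proof (Rabs_pos (Na - Nb)). pose proof (Rabs_pos Nb). pose proof (Rabs_pos (Da - Db)). nra. }
  pose proof (Rabs_pos ((Na - Nb) * Db + Nb * (Db - Da))).
  assert (0 <= / Rabs Da * / Rabs Db) by (apply Rmult_le_pos; left; apply Rinv_0_lt_compat; lra).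
  nra.
Qed.

Section ClampedRhs.

Variables (d : nat) (l : nat -> R) (rho : R).
Hypothesis rho_bounds : 0 <= rho <= 1.
Hypothesis rho_small : pnorm d l * rho <= 1 / 2.

(* Outside [-rho, rho] the right-hand side is frozen, which makes it globally
   bounded and Lipschitz, so that Picard's theorem applies. *)
Definition clamped_rhs (t x : R) : R := rhsL d l t (clamp rho x).

Lemma abs_denL_clamped t a : Rabs a <= rho -> 1 / 2 <= Rabs (denL d l t a) <= 3 / 2.
Proof. intros H. apply abs_denL_bounds; [lra|]. pose proof (pnorm_nonneg d l). nra. Qed.

Lemma abs_rhs_num_le t a : Rabs a <= rho ->
  Rabs (a * pL d l (a * cos t) * sin t ^ 2) <= pnorm d l * rho ^ 2.
Proof.
  intros H. rewrite !Rabs_mult. pose proof (abs_pL_cos_le d l t a ltac:(lra)).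
  assert (Rabs (sin t ^ 2) <= 1)
    by (rewrite <- RPow_abs; apply pow_le_1; split; [apply Rabs_pos|apply abs_sin_le_1]).
  pose proof (Rabs_pos a). pose proof (Rabs_pos (pL d l (a * cos t))).
  pose proof (Rabs_pos (sin t ^ 2)). pose proof (pnorm_nonneg d l).
  assert (Rabs a * Rabs (pL d l (a * cos t)) <= pnorm d l * (rho * rho)).
  { apply Rle_trans with (Rabs a * (pnorm d l * Rabs a)); [apply Rmult_le_compat_l; auto|].
    replace (Rabs a * (pnorm d l * Rabs a)) with (pnorm d l * (Rabs a * Rabs a)) by ring.
    apply Rmult_le_compat_l; auto. apply Rmult_le_compat; auto. }
  apply Rle_trans with (Rabs a * Rabs (pL d l (a * cos t)) * 1); [|simpl pow; lra].
  apply Rmult_le_compat_l; auto. apply Rmult_le_pos; auto.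
Qed.

Lemma clamped_rhs_bounded t x : Rabs (clamped_rhs t x) <= 2 * pnorm d l * rho ^ 2.
Proof.
  unfold clamped_rhs, rhsL. pose proof (abs_clamp_le rho x ltac:(lra)) as Hc.
  set (a := clamp rho x) in *. pose proof (abs_denL_clamped t a Hc). pose proof (abs_rhs_num_le t a Hc).
  assert (denL d l t a <> 0) by (intros E; rewrite E, Rabs_R0 in H; lra).
  unfold Rdiv. rewrite Rabs_mult, Rabs_inv.
  assert (/ Rabs (denL d l t a) <= 2)
    by (replace 2 with (/ (1 / 2)) by field; apply Rinv_le_contravar; lra).
  pose proof (Rabs_pos (a * pL d l (a * cos t) * sin t ^ 2)).
  assert (0 <= / Rabs (denL d l t a)) by (left; apply Rinv_0_lt_compat; lra). nra.
Qed.

Lemma clamped_rhs_lipschitz t x y : Rabs (clamped_rhs t x - clamped_rhs t y) <=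
  4 * (3 / 2 * (1 / 2 + dpnorm d l) + 1 / 2 * dpnorm d l) * Rabs (x - y).
Proof.
  unfold clamped_rhs, rhsL.
  pose proof (abs_clamp_le rho x ltac:(lra)) as Ha. pose proof (abs_clamp_le rho y ltac:(lra)) as Hb.
  pose proof (clamp_lipschitz rho x y ltac:(lra)) as He.
  set (a := clamp rho x) in *. set (b := clamp rho y) in *.
  pose proof (dpnorm_nonneg d l). pose proof (pnorm_nonneg d l).
  assert (HP : Rabs (pL d l (a * cos t) - pL d l (b * cos t)) <= dpnorm d l * Rabs (a - b)).
  { eapply Rle_trans; [apply pL_lipschitz|].
    - pose proof (abs_mul_cos_le a t); lra.
    - pose proof (abs_mul_cos_le b t); lra.
    - apply Rmult_le_compat_l; auto.
      replace (a * cos t - b * cos t) with ((a - b) * cos t) by ring. apply abs_mul_cos_le. }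
  pose proof (Rabs_pos (a - b)). pose proof (Rabs_pos (sin t ^ 2)).
  pose proof (Rabs_pos (pL d l (a * cos t) - pL d l (b * cos t))).
  eapply Rle_trans; [apply (quotient_lipschitz _ _ _ _ (1 / 2 + dpnorm d l) (dpnorm d l) (Rabs (a - b)))|].
  - apply abs_denL_clamped; auto.
  - apply abs_denL_clamped; auto.
  - pose proof (abs_rhs_num_le t b Hb). assert (pnorm d l * rho ^ 2 <= 1 / 2) by (simpl; nra). lra.
  - replace (a * pL d l (a * cos t) * sin t ^ 2 - b * pL d l (b * cos t) * sin t ^ 2) with
      (((a - b) * pL d l (a * cos t) + b * (pL d l (a * cos t) - pL d l (b * cos t))) * sin t ^ 2)
      by ring.
    rewrite Rabs_mult.
    assert (Rabs (sin t ^ 2) <= 1)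
      by (rewrite <- RPow_abs; apply pow_le_1; split; [apply Rabs_pos|apply abs_sin_le_1]).
    assert (Rabs ((a - b) * pL d l (a * cos t) + b * (pL d l (a * cos t) - pL d l (b * cos t)))
      <= (1 / 2 + dpnorm d l) * Rabs (a - b)).
    { eapply Rle_trans; [apply Rabs_triang|]. rewrite !Rabs_mult.
      pose proof (abs_pL_cos_le d l t a ltac:(lra)). pose proof (Rabs_pos b).
      pose proof (Rabs_pos (pL d l (a * cos t))).
      assert (Rabs (pL d l (a * cos t)) <= 1 / 2) by nra. nra. }
    pose proof (Rabs_pos ((a - b) * pL d l (a * cos t) + b * (pL d l (a * cos t) - pL d l (b * cos t)))).
    nra.
  - unfold denL. replace (-1 + sin t * cos t * pL d l (a * cos t) - (-1 + sin t * cos t * pL d l (b * cos t)))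
      with (sin t * cos t * (pL d l (a * cos t) - pL d l (b * cos t))) by ring.
    rewrite !Rabs_mult. pose proof (abs_sin_le_1 t). pose proof (abs_cos_le_1 t).
    pose proof (Rabs_pos (sin t)). pose proof (Rabs_pos (cos t)).
    assert (Rabs (sin t) * Rabs (cos t) <= 1) by nra. nra.
  - apply Rmult_le_compat_l; [|nra]. pose proof (dpnorm_nonneg d l). lra.
Qed.

Lemma clamped_rhs_continuous x t : continuous (fun s => clamped_rhs s x) t.
Proof.
  unfold clamped_rhs, rhsL. pose proof (abs_clamp_le rho x ltac:(lra)) as Ha.
  set (a := clamp rho x) in *.
  apply continuity_pt_filterlim, continuity_pt_div; [apply continuity_pt_filterlim..|].
  - apply continuous_Rmult; [apply continuous_Rmult; [apply continuous_const|apply continuous_pL_cos]|].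
    apply continuous_Rpow, continuous_sin.
  - unfold denL.
    apply (continuous_Rplus (fun _ => -1) (fun s => sin s * cos s * pL d l (a * cos s)));
      [apply continuous_const|].
    apply continuous_Rmult; [apply continuous_Rmult; [apply continuous_sin|apply continuous_cos]|].
    apply continuous_pL_cos.
  - intros E. pose proof (abs_denL_clamped t a Ha). rewrite E, Rabs_R0 in H. lra.
Qed.

End ClampedRhs.

Lemma abs_le_abs_in_segment (th t : R) : Rmin 0 th <= t <= Rmax 0 th -> Rabs t <= Rabs th.
Proof.
  intros [H1 H2]. unfold Rmin, Rmax in *. destruct Rle_dec; unfold Rabs; repeat destruct Rcase_abs; lra.
Qed.

Lemma polar_sol_exists d l th : exists eps, 0 < eps /\ forall r0, 0 < r0 < eps ->
  exists r : R -> R, is_polar_sol d l r0 th r /\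
    forall t, Rmin 0 th <= t <= Rmax 0 th -> r0 / 2 <= r t <= 3 * r0 / 2.
Proof.
  pose proof (pnorm_nonneg d l) as HL. pose proof (Rabs_pos th) as Hth.
  set (K := 16 * (pnorm d l + 1) * (Rabs th + 1)).
  assert (HK : 0 < K) by (unfold K; nra).
  exists (/ K). split; [apply Rinv_0_lt_compat; auto|]. intros r0 [Hr0 Hr0e].
  assert (Hk : K * r0 < 1).
  { apply Rmult_lt_compat_l with (r := K) in Hr0e; auto. rewrite Rinv_r in Hr0e; lra. }
  assert (Hk' : 16 * (pnorm d l + 1) * r0 <= K * r0).
  { unfold K. assert (0 <= 16 * (pnorm d l + 1) * r0) by nra. nra. }
  assert (Hrho : 0 <= 2 * r0 <= 1) by nra.
  assert (HLr : pnorm d l * (2 * r0) <= 1 / 2) by nra.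
  destruct (picard_solution (clamped_rhs d l (2 * r0)) (2 * pnorm d l * (2 * r0) ^ 2)
    (4 * (3 / 2 * (1 / 2 + dpnorm d l) + 1 / 2 * dpnorm d l)) r0) as [y [Hy0 [Hyd Hyb]]].
  - intros; apply clamped_rhs_bounded; auto.
  - intros; apply clamped_rhs_lipschitz; auto.
  - intros; apply clamped_rhs_continuous; auto.
  - assert (Hclose : forall t, Rmin 0 th <= t <= Rmax 0 th -> Rabs (y t - r0) <= r0 / 2).
    { intros t Ht. eapply Rle_trans; [apply Hyb|]. pose proof (abs_le_abs_in_segment th t Ht).
      assert (pnorm d l * Rabs t <= (pnorm d l + 1) * (Rabs th + 1)).
      { apply Rmult_le_compat; auto using Rabs_pos; lra. }
      assert (16 * pnorm d l * Rabs t * r0 <= K * r0).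
      { unfold K. replace (16 * pnorm d l * Rabs t * r0) with (16 * r0 * (pnorm d l * Rabs t)) by ring.
        replace (16 * (pnorm d l + 1) * (Rabs th + 1) * r0)
          with (16 * r0 * ((pnorm d l + 1) * (Rabs th + 1))) by ring.
        apply Rmult_le_compat_l; lra. }
      replace (2 * pnorm d l * (2 * r0) ^ 2 * Rabs t) with (16 * pnorm d l * Rabs t * r0 * (r0 / 2))
        by (simpl; field). nra. }
    exists y. split; [split; auto|].
    + intros t Ht. pose proof (Hclose t Ht) as Hc. apply Rabs_le_between in Hc.
      assert (Hyt : Rabs (y t) <= 2 * r0) by (apply Rabs_le; lra). split.
      * intros E. pose proof (abs_denL_clamped d l (2 * r0) Hrho HLr t (y t) Hyt) as Hd.
        rewrite E, Rabs_R0 in Hd. lra.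
      * specialize (Hyd t). unfold clamped_rhs in Hyd. rewrite clamp_id in Hyd; auto.
    + intros t Ht. pose proof (Hclose t Ht) as Hc. apply Rabs_le_between in Hc. lra.
Qed.

(** * The truncated inverse along orbits *)

Lemma sum_f_R0_split_0 (f : nat -> R) n : sum_f_R0 f n = f O + sum_n_m f 1 n.
Proof.
  induction n as [|n IH]; [simpl; rewrite sum_n_m_1_0; ring|].
  rewrite tech5, sum_n_m_1_S, IH. ring.
Qed.

Lemma sum_f_R0_trunc (f : nat -> R) n m : (n <= m)%nat ->
  (forall j, (n < j <= m)%nat -> f j = 0) -> sum_f_R0 f m = sum_f_R0 f n.
Proof.
  intros H. induction H as [|m H IH]; intros Hz; [reflexivity|].
  rewrite tech5, IH, (Hz (S m)) by (try intros; try apply Hz; lia). ring.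
Qed.

Lemma sum_f_R0_eq_0 (f : nat -> R) n : (forall j, (j <= n)%nat -> f j = 0) -> sum_f_R0 f n = 0.
Proof.
  intros H. induction n as [|n IH]; [apply H; lia|].
  rewrite tech5, IH, (H (S n)) by (try intros; try apply H; lia). ring.
Qed.

Lemma continuous_sum_f_R0 (G : nat -> R -> R) n t : (forall p, (p <= n)%nat -> continuous (G p) t) ->
  continuous (fun x => sum_f_R0 (fun p => G p x) n) t.
Proof.
  intros H. induction n as [|n IH]; [apply H; lia|].
  apply (continuous_ext (fun x => sum_f_R0 (fun p => G p x) n + G (S n) x)); [intros; rewrite tech5; reflexivity|].
  apply (continuous_Rplus (fun x => sum_f_R0 (fun p => G p x) n)); [apply IH; intros|]; apply H; lia.
Qed.

Lemma is_derive_sum_f_R0 (F F' : nat -> R -> R) n t :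
  (forall k, (k <= n)%nat -> is_derive (F k) t (F' k t)) ->
  is_derive (fun x => sum_f_R0 (fun k => F k x) n) t (sum_f_R0 (fun k => F' k t) n).
Proof.
  intros H. induction n as [|n IH]; [apply H; lia|].
  apply (is_derive_ext (fun x => sum_f_R0 (fun k => F k x) n + F (S n) x)); [intros; rewrite tech5; reflexivity|].
  rewrite tech5. apply is_derive_Rplus; [apply IH; intros|]; apply H; lia.
Qed.

Section TruncatedInverse.

Variables (d : nat) (l : nat -> R) (N : nat).
Hypothesis Hl : valid_params d l.
Hypothesis HN : (2 <= N)%nat.

Definition inv_trunc (t x : R) := sum_f_R0 (fun k => ucoef l k t * x ^ k) N.
Definition inv_trunc_dt (t x : R) := sum_f_R0 (fun k => dcoef l k t * x ^ k) N.
Definition inv_trunc_dx (t x : R) := sum_f_R0 (fun k => INR k * ucoef l k t * x ^ pred k) N.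
Definition scoef_trunc (t : R) (j : nat) := if Nat.leb j N then scoef l t j else 0.
Definition rem_coef (t : R) (k : nat) := sum_f_R0 (fun p => pcoef l t p * scoef_trunc t (k - p)) k.

Lemma inv_trunc_dtt_0 x : inv_trunc 0 x = x.
Proof.
  unfold inv_trunc. assert (H : forall n, (1 <= n)%nat -> sum_f_R0 (fun k => ucoef l k 0 * x ^ k) n = x).
  { intros n Hn. induction Hn as [|n Hn IH]; [simpl; rewrite ucoef_0, ucoef_1; ring|].
    rewrite tech5, IH, ucoef_at_0 by lia. ring. }
  apply H; lia.
Qed.

Lemma inv_trunc_derive_along (r : R -> R) t r' : is_derive r t r' ->
  is_derive (fun t => inv_trunc t (r t)) t (inv_trunc_dt t (r t) + inv_trunc_dx t (r t) * r').
Proof.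
  intros Hr. unfold inv_trunc, inv_trunc_dt, inv_trunc_dx.
  rewrite (Rmult_comm (sum_f_R0 _ N) r'), scal_sum, <- sum_plus.
  apply (is_derive_sum_f_R0 (fun k x => ucoef l k x * r x ^ k)
    (fun k x => dcoef l k x * r x ^ k + INR k * ucoef l k x * r x ^ pred k * r')).
  intros k _. eapply is_derive_ext; [intros; reflexivity|].
  replace (dcoef l k t * r t ^ k + INR k * ucoef l k t * r t ^ pred k * r')
    with (dcoef l k t * r t ^ k + ucoef l k t * (INR k * r' * r t ^ pred k)) by ring.
  apply is_derive_Rmult; [eapply ucoef_derive; eauto|apply is_derive_pow, Hr].
Qed.

Lemma pL_cos_expand t x : pL d l (x * cos t) = sum_f_R0 (fun p => pcoef l t p * x ^ p) (S (N + d)).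
Proof.
  rewrite (sum_f_R0_trunc _ d) by (try lia; intros j Hj; unfold pcoef; rewrite Hl by lia; ring).
  rewrite sum_f_R0_split_0. unfold pcoef at 1. rewrite (Hl O) by auto.
  rewrite !Rmult_0_l, Rplus_0_l. apply sum_n_m_ext_loc_R. intros; unfold pcoef.
  rewrite Rpow_mult_distr; ring.
Qed.

Lemma scoef_trunc_expand t x :
  sin t * cos t * inv_trunc_dt t x + sin t ^ 2 * x * inv_trunc_dx t x
  = sum_f_R0 (fun j => scoef_trunc t j * x ^ j) (S (N + d)).
Proof.
  rewrite (sum_f_R0_trunc _ N) by (first [lia | intros j Hj; unfold scoef_trunc;
    destruct (Nat.leb_spec j N); [lia|ring]]).
  rewrite (sum_eq _ (fun j => scoef l t j * x ^ j))
    by (intros i Hi; unfold scoef_trunc; destruct (Nat.leb_spec i N); [reflexivity|lia]).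
  unfold inv_trunc_dt, inv_trunc_dx. clear HN. induction N as [|n IH].
  - simpl. unfold scoef. simpl. ring.
  - rewrite !tech5, <- IH. unfold scoef. simpl pred. simpl pow. ring.
Qed.

Lemma pcoef_scoef_product t x :
  sum_f_R0 (fun p => pcoef l t p * x ^ p) (S (N + d)) * sum_f_R0 (fun j => scoef_trunc t j * x ^ j) (S (N + d))
  = sum_f_R0 (fun k => rem_coef t k * x ^ k) (S (N + d)).
Proof.
  rewrite cauchy_finite by lia.
  match goal with |- _ + ?Z = _ => replace Z with 0 end.
  - rewrite Rplus_0_r. apply sum_eq. intros k Hk. unfold rem_coef.
    rewrite Rmult_comm, scal_sum. apply sum_eq. intros p Hp.
    replace (x ^ k) with (x ^ p * x ^ (k - p)) by (rewrite <- pow_add; f_equal; lia). ring.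
  - symmetry. apply sum_f_R0_eq_0. intros k Hk. apply sum_f_R0_eq_0. intros p Hp.
    destruct (le_lt_dec (S (p + k)) d).
    + unfold scoef_trunc. destruct (Nat.leb_spec (S (N + d) - p) N); [lia|ring].
    + unfold pcoef. rewrite Hl by lia. ring.
Qed.

Lemma rem_coef_low t k : (k <= N)%nat -> rem_coef t k = dcoef l k t.
Proof.
  intros Hk. unfold rem_coef. rewrite sum_f_R0_split_0, dcoef_rec. unfold pcoef at 1.
  rewrite Hl by auto. rewrite Rmult_0_l, Rmult_0_l, Rplus_0_l.
  apply sum_n_m_ext_loc_R. intros p Hp. unfold scoef_trunc.
  destruct (Nat.leb_spec (k - p) N); [reflexivity|lia].
Qed.

(* The recursion defining the coefficients makes the terms of order [<= N] cancel. *)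
Lemma inv_trunc_remainder t x :
  inv_trunc_dt t x * denL d l t x + inv_trunc_dx t x * (x * pL d l (x * cos t) * sin t ^ 2)
  = sum_f_R0 (fun k => rem_coef t (S N + k) * x ^ (S N + k)) d.
Proof.
  unfold denL.
  replace (inv_trunc_dt t x * (-1 + sin t * cos t * pL d l (x * cos t))
      + inv_trunc_dx t x * (x * pL d l (x * cos t) * sin t ^ 2))
    with (- inv_trunc_dt t x + pL d l (x * cos t)
      * (sin t * cos t * inv_trunc_dt t x + sin t ^ 2 * x * inv_trunc_dx t x)) by ring.
  rewrite scoef_trunc_expand, pL_cos_expand, pcoef_scoef_product, (tech2 _ N (S (N + d))) by lia.
  unfold inv_trunc_dt.
  rewrite (sum_eq (fun k => rem_coef t k * x ^ k) (fun k => dcoef l k t * x ^ k))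
    by (intros; rewrite rem_coef_low; auto).
  replace (S (N + d) - S N)%nat with d by lia. ring.
Qed.

Definition rem_norm (t : R) := sum_f_R0 (fun k => Rabs (rem_coef t (S N + k))) d.

Lemma abs_inv_trunc_remainder_le t x : Rabs x <= 1 ->
  Rabs (sum_f_R0 (fun k => rem_coef t (S N + k) * x ^ (S N + k)) d) <= Rabs x ^ S N * rem_norm t.
Proof.
  intros Hx. eapply Rle_trans; [apply Rsum_abs|]. unfold rem_norm. rewrite scal_sum.
  apply sum_Rle. intros k _. rewrite Rabs_mult, <- RPow_abs, pow_add.
  pose proof (Rabs_pos (rem_coef t (S N + k))).
  pose proof (pow_le_1 (Rabs x) k ltac:(split; auto; apply Rabs_pos)).
  pose proof (pow_le (Rabs x) (S N) (Rabs_pos x)). pose proof (pow_le (Rabs x) k (Rabs_pos x)).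
  assert (Rabs x ^ S N * Rabs x ^ k <= Rabs x ^ S N) by nra. nra.
Qed.

Lemma rem_norm_continuous t : continuous rem_norm t.
Proof.
  apply (continuous_sum_f_R0 (fun k t => Rabs (rem_coef t (S N + k)))). intros k _.
  apply continuous_Rabs_comp. unfold rem_coef.
  apply (continuous_sum_f_R0 (fun p t => pcoef l t p * scoef_trunc t (S N + k - p))). intros p _.
  apply continuous_Rmult.
  - apply continuous_Rmult; [apply continuous_const|apply continuous_Rpow, continuous_cos].
  - unfold scoef_trunc. destruct (Nat.leb _ N); [|apply continuous_const]. unfold scoef.
    apply (continuous_Rplus (fun t => sin t * cos t * dcoef l (S N + k - p) t)).
    + apply continuous_Rmult; [apply continuous_Rmult; [apply continuous_sin|apply continuous_cos]|].
      eapply dcoef_continuous; eauto.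
    + apply continuous_Rmult; [apply continuous_Rmult; [apply continuous_Rpow, continuous_sin|apply continuous_const]|].
      eapply ucoef_continuous; eauto.
Qed.

Lemma inv_trunc_derive_along_sol r0 th r t : is_polar_sol d l r0 th r -> Rmin 0 th <= t <= Rmax 0 th ->
  is_derive (fun t => inv_trunc t (r t)) t
    (sum_f_R0 (fun k => rem_coef t (S N + k) * r t ^ (S N + k)) d / denL d l t (r t)).
Proof.
  intros [_ Hsol] Ht. destruct (Hsol t Ht) as [Hden Hder].
  eapply is_derive_ext; [intros; reflexivity|].
  replace (_ / _) with (inv_trunc_dt t (r t) + inv_trunc_dx t (r t) * rhsL d l t (r t)).
  - apply inv_trunc_derive_along, Hder.
  - rewrite <- inv_trunc_remainder. unfold rhsL. field. auto.
Qed.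

Lemma inv_trunc_error th : exists C eps0, 0 < eps0 /\ forall r0 (r : R -> R), 0 < r0 < eps0 ->
  is_polar_sol d l r0 th r -> (forall t, Rmin 0 th <= t <= Rmax 0 th -> r0 / 2 <= r t <= 3 * r0 / 2) ->
  Rabs (inv_trunc th (r th) - r0) <= C * r0 ^ S N.
Proof.
  destruct (continuity_ab_maj rem_norm (- Rabs th) (Rabs th)) as [tm [Htm _]];
    [pose proof (Rabs_pos th); lra|intros; apply continuity_pt_filterlim, rem_norm_continuous|].
  set (K := rem_norm tm).
  assert (HK : 0 <= K) by (apply cond_pos_sum; intros; apply Rabs_pos).
  pose proof (pnorm_nonneg d l) as HL.
  exists (2 * K * Rabs th * (3 / 2) ^ S N), (/ (3 * (pnorm d l + 1))).
  split; [apply Rinv_0_lt_compat; lra|]. intros r0 r [Hr0 Hr0e] Hsol Hb.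
  assert (Hr0s : 3 * (pnorm d l + 1) * r0 < 1).
  { apply Rmult_lt_compat_l with (r := 3 * (pnorm d l + 1)) in Hr0e; [|lra].
    rewrite Rinv_r in Hr0e by lra. lra. }
  destruct (MVT_gen (fun t => inv_trunc t (r t)) 0 th (fun t =>
    sum_f_R0 (fun k => rem_coef t (S N + k) * r t ^ (S N + k)) d / denL d l t (r t)))
    as [c [Hc Hmvt]].
  { intros x Hx. apply (inv_trunc_derive_along_sol r0 th); auto. lra. }
  { intros x Hx. apply continuity_pt_filterlim.
    eapply (is_derive_continuous_R (fun t => inv_trunc t (r t))).
    apply (inv_trunc_derive_along_sol r0 th); auto. }
  rewrite inv_trunc_dtt_0, (proj1 Hsol), Rminus_0_r in Hmvt. rewrite Hmvt.
  specialize (Hb c Hc). assert (Hrc : Rabs (r c) = r c) by (apply Rabs_right; lra).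
  destruct (abs_denL_bounds d l c (r c)) as [HD _]; [rewrite Hrc; nra|rewrite Hrc; nra|].
  pose proof (abs_inv_trunc_remainder_le c (r c) ltac:(rewrite Hrc; nra)) as HE.
  assert (Hg : rem_norm c <= K).
  { apply Htm. pose proof (abs_le_abs_in_segment th c Hc). apply Rabs_le_between in H. lra. }
  set (E := sum_f_R0 (fun k => rem_coef c (S N + k) * r c ^ (S N + k)) d) in *.
  assert (HE2 : Rabs E <= (3 / 2) ^ S N * r0 ^ S N * K).
  { eapply Rle_trans; [apply HE|]. rewrite <- Rpow_mult_distr, Hrc.
    apply Rmult_le_compat; [apply pow_le; lra|apply cond_pos_sum; intros; apply Rabs_pos| |auto].
    apply pow_incr; lra. }
  rewrite Rabs_mult. unfold Rdiv. rewrite Rabs_mult, Rabs_inv.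
  assert (HiD : / Rabs (denL d l c (r c)) <= 2)
    by (replace 2 with (/ (1 / 2)) by field; apply Rinv_le_contravar; lra).
  pose proof (Rabs_pos E). pose proof (Rabs_pos th).
  assert (0 <= / Rabs (denL d l c (r c))) by (left; apply Rinv_0_lt_compat; lra).
  pose proof (pow_le (3 / 2) (S N) ltac:(lra)). pose proof (pow_le r0 (S N) ltac:(lra)).
  apply Rle_trans with ((3 / 2) ^ S N * r0 ^ S N * K * 2 * Rabs th); [|right; unfold Rdiv; ring].
  apply Rmult_le_compat_r; auto. apply Rmult_le_compat; auto.
Qed.

End TruncatedInverse.

(** * Identification of the coefficients *)

Lemma series_tail_le (a : nat -> R) sv m c q : is_series a sv -> 0 <= q <= 1 / 2 -> 0 <= c ->
  (forall i, Rabs (a (S m + i)%nat) <= c * q ^ i) -> Rabs (sv - sum_n a m) <= 2 * c.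
Proof.
  intros Hs Hq Hc Hb. apply is_series_Reals in Hs. rewrite sum_n_Reals.
  apply Rle_plus_epsilon. intros eps Heps.
  destruct (Hs eps Heps) as [N0 HN0]. set (n := max N0 (S m)).
  specialize (HN0 n (Nat.le_max_l _ _)). unfold R_dist in HN0.
  rewrite (tech2 a m n) in HN0 by (unfold n; lia).
  set (T := sum_f_R0 (fun i => a (S m + i)%nat) (n - S m)) in *.
  assert (HT : Rabs T <= 2 * c).
  { unfold T. eapply Rle_trans; [apply Rsum_abs|].
    eapply Rle_trans; [apply (sum_Rle _ (fun i => c * q ^ i)); intros; apply Hb|].
    replace (sum_f_R0 (fun i => c * q ^ i) (n - S m)) with (c * sum_f_R0 (fun i => q ^ i) (n - S m))
      by (rewrite scal_sum; apply sum_eq; intros; ring).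
    rewrite (Rmult_comm 2 c). apply Rmult_le_compat_l; auto.
    assert (Hgeo : forall k, sum_f_R0 (fun i => q ^ i) k <= 2 - q ^ k).
    { induction k as [|k IH]; [simpl; lra|]. rewrite tech5. simpl pow.
      pose proof (pow_le q k ltac:(lra)). nra. }
    pose proof (Hgeo (n - S m)%nat). pose proof (pow_le q (n - S m) ltac:(lra)). lra. }
  replace (sv - sum_f_R0 a m) with (- (sum_f_R0 a m + T - sv) + T) by ring.
  eapply Rle_trans; [apply Rabs_triang|]. rewrite Rabs_Ropp. lra.
Qed.

Lemma power_series_tail_le (c : nat -> R) k x y Bd sv m : 0 < y -> 0 <= x <= y / 2 ->
  (forall n, Rabs (c n * y ^ (n + k)) <= Bd) -> is_series (fun n => c n * x ^ (n + k)) sv ->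
  Rabs (sv - sum_n (fun n => c n * x ^ (n + k)) m) <= 2 * (Bd * (x / y) ^ (S m + k)).
Proof.
  intros Hy Hx HBd Hs. set (q := x / y).
  assert (Hq : 0 <= q <= 1 / 2).
  { unfold q. split; [apply Rdiv_le_0_compat; lra|].
    apply Rmult_le_reg_r with y; [lra|]. unfold Rdiv. rewrite Rmult_assoc, Rinv_l; lra. }
  assert (HB0 : 0 <= Bd) by (eapply Rle_trans; [apply Rabs_pos|apply (HBd O)]).
  apply (series_tail_le _ _ _ _ q Hs Hq); [apply Rmult_le_pos; auto; apply pow_le; lra|].
  intros i. specialize (HBd (S m + i)%nat).
  replace (x ^ (S m + i + k)) with (y ^ (S m + i + k) * q ^ (S m + k + i))
    by (rewrite (Nat.add_shuffle0 (S m) k i), <- Rpow_mult_distr; f_equal; unfold q; field; lra).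
  rewrite <- Rmult_assoc, Rabs_mult, (Rabs_right (q ^ (S m + k + i))), (pow_add q (S m + k) i)
    by (apply Rle_ge, pow_le; lra).
  replace (Bd * q ^ (S m + k) * q ^ i) with (Bd * (q ^ (S m + k) * q ^ i)) by ring.
  apply Rmult_le_compat_r; [apply Rmult_le_pos; apply pow_le; lra|auto].
Qed.

Lemma is_series_terms_bounded (a : nat -> R) sv : is_series a sv ->
  exists Bd, 0 <= Bd /\ forall n, Rabs (a n) <= Bd.
Proof.
  intros H. assert (Hl : is_lim_seq a 0) by (apply ex_series_lim_0; exists sv; auto).
  apply is_lim_seq_Reals in Hl. destruct (Hl 1 ltac:(lra)) as [N HN].
  assert (Hfin : exists C, forall n, (n < N)%nat -> Rabs (a n) <= C).
  { clear HN. induction N as [|N [C HC]]; [exists 0; intros; lia|].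
    exists (Rmax C (Rabs (a N))). intros n Hn.
    destruct (Nat.eq_dec n N) as [->|]; [apply Rmax_r|].
    eapply Rle_trans; [apply HC; lia|apply Rmax_l]. }
  destruct Hfin as [C HC]. exists (Rmax C 1). split; [eapply Rle_trans; [|apply Rmax_r]; lra|].
  intros n. destruct (le_lt_dec N n) as [Hn|Hn].
  - specialize (HN n Hn). unfold R_dist in HN. rewrite Rminus_0_r in HN.
    eapply Rle_trans; [left; exact HN|apply Rmax_r].
  - eapply Rle_trans; [apply HC; auto|apply Rmax_l].
Qed.

Lemma eq_0_of_le_lin z K eps : 0 < eps -> (forall r, 0 < r < eps -> Rabs z <= K * r) -> z = 0.
Proof.
  intros He H. apply Rabs_eq_0, Rle_antisym; [|apply Rabs_pos].
  apply Rle_plus_epsilon. intros e Hee. pose proof (Rabs_pos z). pose proof (Rabs_pos K).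
  set (r := Rmin (eps / 2) (e / (Rabs K + 1))).
  assert (Hr : 0 < r) by (unfold r; apply Rmin_glb_lt; apply Rdiv_lt_0_compat; lra).
  assert (r <= eps / 2) by apply Rmin_l. assert (Hre : r <= e / (Rabs K + 1)) by apply Rmin_r.
  pose proof (H r ltac:(lra)). pose proof (Rle_abs K).
  apply Rmult_le_compat_l with (r := Rabs K + 1) in Hre; [|lra].
  replace ((Rabs K + 1) * (e / (Rabs K + 1))) with e in Hre by (field; lra). nra.
Qed.

Lemma eq_0_of_le_pow_succ (z K eps : R) (N : nat) : 0 < eps ->
  (forall r0, 0 < r0 < eps -> exists rho, r0 / 2 <= rho <= 3 * r0 / 2 /\
     Rabs z * rho ^ N <= K * rho ^ S N) -> z = 0.
Proof.
  intros He H. apply (eq_0_of_le_lin _ (3 / 2 * Rabs K) eps He). intros r0 Hr0.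
  destruct (H r0 Hr0) as [rho [Hrho Hz]].
  assert (HrN : 0 < rho ^ N) by (apply pow_lt; lra).
  assert (Rabs z <= K * rho).
  { apply Rmult_le_reg_r with (rho ^ N); auto. simpl in Hz. lra. }
  pose proof (Rle_abs K). pose proof (Rabs_pos K). nra.
Qed.

Section InverseCoefficients.

Variables (d : nat) (v : nat -> R -> (nat -> R) -> R).
Hypothesis hv : inverse_expansion d v.
Variables (l : nat -> R) (th : R).
Hypothesis Hl : valid_params d l.

Lemma inverse_partial_sum N rho : (2 <= N)%nat ->
  (forall j, (2 <= j < N)%nat -> v j th l = ucoef l j th) ->
  sum_n (fun n => v (n + 2)%nat th l * rho ^ (n + 2)) (N - 2)
  = (inv_trunc l N th rho - rho) + (v N th l - ucoef l N th) * rho ^ N.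
Proof.
  intros HN IH. rewrite sum_n_Reals.
  set (g := fun n => ucoef l (n + 2) th * rho ^ (n + 2)).
  assert (Hlast : forall (f : nat -> R) m, (forall k, (k < m)%nat -> f k = g k) ->
    sum_f_R0 f m = sum_f_R0 g m + (f m - g m)).
  { intros f [|m] Hf; [simpl; ring|]. rewrite !tech5, (sum_eq f g) by (intros; apply Hf; lia). ring. }
  rewrite Hlast by (intros k Hk; unfold g; rewrite IH by lia; reflexivity).
  unfold g, inv_trunc. rewrite (tech2 _ 1 N) by lia. simpl (sum_f_R0 _ 1).
  rewrite ucoef_0, ucoef_1. replace (N - S 1)%nat with (N - 2)%nat by lia.
  replace (N - 2 + 2)%nat with N by lia.
  rewrite (sum_eq (fun i => ucoef l (S 1 + i) th * rho ^ (S 1 + i))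
    (fun n => ucoef l (n + 2) th * rho ^ (n + 2))) by (intros i _; rewrite Nat.add_comm; reflexivity).
  match goal with |- ?a = ?b => change (@eq R a b) end. ring.
Qed.

Lemma coef_gap_le N r0 rho : (2 <= N)%nat ->
  (forall j, (2 <= j < N)%nat -> v j th l = ucoef l j th) -> 0 <= rho ->
  Rabs (v N th l - ucoef l N th) * rho ^ N <= Rabs (inv_trunc l N th rho - r0)
    + Rabs ((r0 - rho) - sum_n (fun n => v (n + 2)%nat th l * rho ^ (n + 2)) (N - 2)).
Proof.
  intros HN IH Hrho.
  replace (Rabs (v N th l - ucoef l N th) * rho ^ N) with (Rabs ((v N th l - ucoef l N th) * rho ^ N))
    by (rewrite Rabs_mult, (Rabs_right (rho ^ N)); auto; apply Rle_ge, pow_le; lra).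
  rewrite inverse_partial_sum by auto.
  eapply Rle_trans; [|apply Rabs_triang]. rewrite <- Rabs_Ropp. right. f_equal. ring.
Qed.

Lemma inverse_coef_step N : (2 <= N)%nat ->
  (forall j, (2 <= j < N)%nat -> v j th l = ucoef l j th) -> v N th l = ucoef l N th.
Proof.
  intros HN IH.
  destruct (hv l Hl th) as [delta [Hdelta Hser]].
  destruct (polar_sol_exists d l th) as [e1 [He1 Hsol]].
  destruct (inv_trunc_error d l N Hl HN th) as [C [e0 [He0 Hphi]]].
  set (eps := Rmin delta (Rmin e1 e0)).
  assert (Heps : 0 < eps) by (unfold eps; repeat apply Rmin_glb_lt; auto).
  assert (Hed : eps <= delta) by apply Rmin_l.
  assert (He1' : eps <= e1) by (eapply Rle_trans; [apply Rmin_r|apply Rmin_l]).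
  assert (He0' : eps <= e0) by (eapply Rle_trans; [apply Rmin_r|apply Rmin_r]).
  assert (Hth : Rmin 0 th <= th <= Rmax 0 th) by (unfold Rmin, Rmax; destruct Rle_dec; lra).
  destruct (Hsol (eps / 2) ltac:(lra)) as [r1 [Hr1 Hb1]].
  set (rho1 := r1 th). pose proof (Hb1 th Hth) as Hrho1. fold rho1 in Hrho1.
  pose proof (Hser (eps / 2) r1 ltac:(rewrite Rabs_right; lra) Hr1) as Hs1.
  destruct (is_series_terms_bounded _ _ Hs1) as [Bd [HBd0 HBd]].
  apply Rminus_diag_uniq.
  apply (eq_0_of_le_pow_succ _ (Rabs C * 2 ^ S N + 2 * Bd / rho1 ^ S N) (Rmin eps (rho1 / 3)) N);
    [apply Rmin_glb_lt; lra|].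
  intros r0 [Hr0 Hr0e].
  assert (Hr0a : r0 < eps) by (eapply Rlt_le_trans; [exact Hr0e|apply Rmin_l]).
  assert (Hr0b : r0 <= rho1 / 3) by (left; eapply Rlt_le_trans; [exact Hr0e|apply Rmin_r]).
  destruct (Hsol r0 ltac:(lra)) as [r [Hr Hb]].
  set (rho := r th). pose proof (Hb th Hth) as Hrho. fold rho in Hrho.
  exists rho. split; auto.
  pose proof (Hser r0 r ltac:(rewrite Rabs_right; lra) Hr) as Hs. fold rho in Hs.
  pose proof (Hphi r0 r ltac:(lra) Hr Hb) as Hp. fold rho in Hp.
  pose proof (power_series_tail_le (fun n => v (n + 2)%nat th l) 2 rho rho1 Bd (r0 - rho) (N - 2)
    ltac:(lra) ltac:(lra) HBd Hs) as Htail.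
  replace (S (N - 2) + 2)%nat with (S N) in Htail by lia.
  pose proof (coef_gap_le N r0 rho HN IH ltac:(lra)) as Hgap.
  assert (H1 : C * r0 ^ S N <= Rabs C * 2 ^ S N * rho ^ S N).
  { rewrite Rmult_assoc, <- Rpow_mult_distr. apply Rle_trans with (Rabs C * r0 ^ S N).
    - apply Rmult_le_compat_r; [apply pow_le; lra|apply Rle_abs].
    - apply Rmult_le_compat_l; [apply Rabs_pos|apply pow_incr; lra]. }
  assert (H2 : Bd * (rho / rho1) ^ S N = Bd / rho1 ^ S N * rho ^ S N).
  { unfold Rdiv. rewrite Rpow_mult_distr, pow_inv. ring. }
  rewrite Rmult_plus_distr_r. unfold Rdiv at 1. lra.
Qed.

Theorem inverse_coef_eq_ucoef N : (2 <= N)%nat -> v N th l = ucoef l N th.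
Proof.
  induction N as [N IH] using lt_wf_ind. intros HN.
  apply inverse_coef_step; auto. intros j Hj. apply IH; lia.
Qed.

End InverseCoefficients.

Lemma ucoef_through_sin d l k : (2 <= k)%nat -> valid_params d l ->
  (forall m, (1 <= m)%nat -> (2 * m < k)%nat -> l (2 * m)%nat = 0) ->
  forall t, ucoef l k t = ucoef l k (asin (sin t)).
Proof.
  intros Hk Hl Hev. destruct (coefs_symmetric d k l Hl Hev k (le_n k)) as [_ [H1 [_ H2]]].
  apply factor_through_sin; auto.
Qed.

Lemma div2_bounds a : (2 * (a / 2) <= a < 2 * (a / 2) + 2)%nat.
Proof. pose proof (Nat.div_mod_eq a 2). pose proof (Nat.mod_upper_bound a 2). lia. Qed.

Lemma ucoef_even_part_in_ideal d k k0 t :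
  in_even_ideal d k0 (fun l => ucoef l k t - ucoef (zero_at_all (fun i => 2 * i)%nat k0 l) k t).
Proof.
  destruct (is_poly_fun_split d (fun l => ucoef l k t) (fun i => 2 * i)%nat k0) as [G [HG HE]].
  { apply (is_cpoly_is_poly_fun d (fun l t => ucoef l k t)), is_cpoly_coefs. }
  exists G. split; [intros; apply is_poly_fun_is_poly_in; auto|]. intros l Hl.
  rewrite (HE l Hl). unfold sum_n. rewrite sum_Sn_m by lia. simpl. rewrite (Hl O) by auto.
  unfold plus; simpl; ring.
Qed.

(* With the even parameters of order [< k] removed, removing the odd ones of order [< k]
   as well puts us in the case of [ucoef_vanish]. *)
Lemma ucoef_odd_split d k s : (2 <= k)%nat ->
  exists W : nat -> (nat -> R) -> R, (forall j, is_poly_fun d (W j)) /\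
    forall l, valid_params d l ->
      ucoef (zero_at_all (fun i => 2 * i)%nat ((k - 1) / 2) l) k s
      = sum_n (fun j => l (2 * j + 1)%nat * W j l) ((k - 2) / 2).
Proof.
  intros Hk. set (k0 := ((k - 1) / 2)%nat). set (k1 := ((k - 2) / 2)%nat).
  pose proof (div2_bounds (k - 1)) as Hk0. pose proof (div2_bounds (k - 2)) as Hk1.
  fold k0 in Hk0. fold k1 in Hk1.
  set (g := fun l => ucoef (zero_at_all (fun i => 2 * i)%nat k0 l) k s).
  destruct (is_poly_fun_split d g (fun j => 2 * j + 1)%nat k1) as [W [HW HE]].
  { apply (is_poly_fun_zero_at_all d (fun l => ucoef l k s)).
    apply (is_cpoly_is_poly_fun d (fun l t => ucoef l k t)), is_cpoly_coefs. }
  exists W. split; auto. intros l Hl. fold (g l). rewrite (HE l Hl).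
  replace (g _) with 0; [ring|]. symmetry. apply (ucoef_vanish _ k); [|lia].
  intros i Hi. destruct (Nat.Even_or_Odd i) as [[m ->]|[m ->]].
  - apply (zero_at_all_kill (fun i => 2 * i)%nat). lia.
  - rewrite zero_at_all_keep by lia. apply (zero_at_all_kill (fun j => 2 * j + 1)%nat). lia.
Qed.

Theorem ucoef_decomposition d k : (2 <= k)%nat ->
  let k0 := ((k - 1) / 2)%nat in
  let k1 := ((k - 2) / 2)%nat in
  exists (f : R -> (nat -> R) -> R) (w : nat -> R -> (nat -> R) -> R),
    (forall theta, in_even_ideal d k0 (f theta)) /\
    (forall j s, is_poly_in d (w j s)) /\
    (forall j l, w j 0 l = 0) /\
    (forall theta l, valid_params d l ->
       ucoef l k theta = f theta l + sum_n (fun j => l (2 * j + 1)%nat * w j (sin theta) l) k1).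
Proof.
  intros Hk k0 k1.
  assert (HW : forall s, { W : nat -> (nat -> R) -> R | (forall j, is_poly_fun d (W j)) /\
    forall l, valid_params d l -> ucoef (zero_at_all (fun i => 2 * i)%nat k0 l) k (asin s)
      = sum_n (fun j => l (2 * j + 1)%nat * W j l) k1 })
    by (intros s; apply constructive_indefinite_description, ucoef_odd_split; auto).
  exists (fun t l => ucoef l k t - ucoef (zero_at_all (fun i => 2 * i)%nat k0 l) k t).
  (* [w] is set to 0 at [s = 0]: there the odd part vanishes anyway, as [v_k(0) = 0]. *)
  exists (fun j s l => if Req_EM_T s 0 then 0 else proj1_sig (HW s) j l).
  split; [|split; [|split]].
  - intros t. apply ucoef_even_part_in_ideal.
  - intros j s. apply is_poly_fun_is_poly_in. destruct (Req_EM_T s 0); [apply is_poly_fun_0|].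
    apply (proj2_sig (HW s)).
  - intros j l. destruct (Req_EM_T 0 0); [reflexivity|congruence].
  - intros t l Hl.
    rewrite (ucoef_through_sin d (zero_at_all (fun i => 2 * i)%nat k0 l) k Hk).
    + destruct (Req_EM_T (sin t) 0) as [E|E].
      * rewrite E, asin_0, ucoef_at_0 by lia. destruct (Req_EM_T 0 0); [|congruence].
        unfold sum_n. rewrite sum_n_m_eq_0 by (intros; ring). ring.
      * destruct (Req_EM_T (sin t) 0); [contradiction|].
        rewrite (proj2 (proj2_sig (HW (sin t))) l Hl). ring.
    + apply zero_at_all_valid; auto.
    + intros m Hm1 Hm2. apply (zero_at_all_kill (fun i => 2 * i)%nat).
      pose proof (div2_bounds (k - 1)). unfold k0. lia.
Qed.

Theorem lemmaI1 (d : nat) (hd : (1 <= d)%nat)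
  (v : nat -> R -> (nat -> R) -> R) (hv : inverse_expansion d v)
  (k : nat) (hk : (2 <= k)%nat) :
  let k0 := ((k - 1) / 2)%nat in
  let k1 := ((k - 2) / 2)%nat in
  exists (f : R -> (nat -> R) -> R) (w : nat -> R -> (nat -> R) -> R),
    (forall theta, in_even_ideal d k0 (f theta)) /\
    (forall j s, (j <= k1)%nat -> is_poly_in d (w j s)) /\
    (forall j l, (j <= k1)%nat -> valid_params d l -> w j 0 l = 0) /\
    (forall theta l, valid_params d l ->
       v k theta l = f theta l
         + sum_n (fun j => l (2 * j + 1)%nat * w j (sin theta) l) k1).
Proof.
  intros k0 k1.
  destruct (ucoef_decomposition d k hk) as [f [w [Hf [Hw [Hw0 Hdec]]]]].
  exists f, w. split; [|split; [|split]]; auto.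
  intros theta l Hl. rewrite (inverse_coef_eq_ucoef d v hv l theta Hl k hk). auto.
Qed.
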